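(* Let $\mathcal A$ and $\mathcal C$ be complete and cocomplete categories such that: (i) there is a functor $\odot\colon \mathcal A\times\mathcal C\to\mathcal C$ which is divisible on both sides; (ii) $\mathcal C$ is endowed with two sets of maps $I$ and $J$ such that $(I\text{-cof},I\text{-fib})$ and $(J\text{-cof},J\text{-fib})$ are weak factorization systems; (iii) $\mathcal A$ is endowed with two sets of maps $I_{\mathcal A}$ and $J_{\mathcal A}$; (iv) $J\subseteq I\text{-cof}$ and $J_{\mathcal A}\subseteq I_{\mathcal A}\text{-cof}$; (v) $I_{\mathcal A}\,\hat\odot\, I\subseteq I\text{-cof}$; (vi) every map in $I_{\mathcal A}\,\hat\odot\, J$ or in $J_{\mathcal A}\,\hat\odot\, I$ has the left lifting property with respect to all $J$-fibrations between $J$-fibrant objects; (vii) there is an $I_{\mathcal A}$-cofibrant object $\mathbb I$ of $\mathcal A$ such that $\mathbb I\odot(-)$ is isomorphic to the identity endofunctor of $\mathcal C$; (viii) there is in $\mathcal A$ a commutative square with top map an $I_{\mathcal A}$-cofibration $i\colon \mathbb I\sqcup\mathbb I\to C$, left map the codiagonal $\mathbb I\sqcup\mathbb I\to\mathbb I$, a bottom map $\mathbb I\to D$ and a right map $C\to D$, such that both the map $\mathbb I\to D$ and the first map $\mathbb I\to C$ (the composite of the first coproduct inclusion with $i$) are acyclic cofibrations, i.e. $I_{\mathcal A}$-cofibrations having the left lifting property with respect to all $J_{\mathcal A}$-fibrations between $J_{\mathcal A}$-fibrant objects. Then there is a weak model structure on $\mathcal C$ such that the fibrations between fibrant objects are the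 $J$-fibrations and the cofibrations between cofibrant objects are the $I$-cofibrations.
   Context: All existence statements are understood constructively as chosen data (chosen lifts, chosen factorizations). For a set of maps $I$, an $I$-fibration is a map with (chosen) right lifting property against every map of $I$, and an $I$-cofibration is a map with the left lifting property against every $I$-fibration; an object $X$ is $I$-cofibrant if $0\to X$ is an $I$-cofibration and $J$-fibrant if $X\to 1$ is a $J$-fibration. $(I\text{-cof},I\text{-fib})$ is a weak factorization system when every map factors as an $I$-cofibration followed by an $I$-fibration. A functor $\odot\colon\mathcal A\times\mathcal C\to\mathcal C$ is divisible on both sides if for every $a$ the functor $a\odot(-)$ has a right adjoint and for every $c$ the functor $(-)\odot c$ has a right adjoint. For $f\colon X_1\to Y_1$ in $\mathcal A$ and $g\colon X_2\to Y_2$ in $\mathcal C$, the corner-product (pushout-product) $f\hat\odot g$ is the induced map $(X_1\odot Y_2)\sqcup_{X_1\odot X_2}(Y_1\odot X_2)\to Y_1\odot Y_2$; for sets of maps $S\hat\odot T=\{f\hat\odot g: f\in S,g\in T\}$. Weak model category: a category with a class of cofibrations and a class of fibrations. A class of cofibrations is a class of maps such that there is an initial object $0$ which is cofibrant ($X$ is cofibrant if $0\to X$ is a cofibration), isomorphisms with cofibrant domain are cofibrations, cofibrations compose, and for every cofibration $A\to B$ and map $A\to C$ with $A,C$ cofibrant the pushout $C\sqcup_AB$ exists and $C\to C\sqcup_AB$ is a cofibration; a class of fibrations is a class of cofibrations in the opposite category (fibrant objects defined dually). An acyclic fibration is a fibration with the right lifting property against all cofibrations between cofibrant objects; an acyclic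 cofibration is a cofibration with the left lifting property against all fibrations between fibrant objects. A relative strong cylinder object for a cofibration $A\to B$ is a factorization $B\sqcup_AB\to I_AB\to B$ of the codiagonal whose first map is a cofibration and whose restriction along the first inclusion $B\to B\sqcup_AB$ is an acyclic cofibration; a relative strong path object for a fibration $Y\to X$ is dually a factorization $Y\to P_XY\to Y\times_XY$ of the diagonal whose second map is a fibration and whose composite with the first projection is an acyclic fibration. A weak model category requires: every map from a cofibrant to a fibrant object factors as a cofibration followed by an acyclic fibration and as an acyclic cofibration followed by a fibration; every cofibration from a cofibrant to a fibrant object has a relative strong cylinder object; every fibration from a cofibrant to a fibrant object has a relative strong path object. *)

Set Universe Polymorphism.
Set Implicit Arguments.
Unset Strict Implicit.

Record Category@{o h} := {
  ob :> Type@{o};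
  hom : ob -> ob -> Type@{h};
  idm : forall x, hom x x;
  comp : forall x y z, hom y z -> hom x y -> hom x z;
  comp_id_l : forall x y (f : hom x y), comp (idm y) f = f;
  comp_id_r : forall x y (f : hom x y), comp f (idm x) = f;
  comp_assoc : forall x y z w (f : hom x y) (g : hom y z) (k : hom z w),
      comp k (comp g f) = comp (comp k g) f
}.
Arguments hom {C} : rename.
Arguments idm {C} x : rename.
Arguments comp {C} {x y z} : rename.
Notation "g ∘ f" := (comp g f) (at level 40, left associativity).

Record Functor (J C : Category) := {
  fo :> J -> C;
  fm : forall a b, hom a b -> hom (fo a) (fo b);
  fm_id : forall a, fm (idm a) = idm (fo a);
  fm_comp : forall a b c (u : hom a b) (v : hom b c), fm (v ∘ u) = fm v ∘ fm u
}.
Arguments fm {J C} F {a b} : rename.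

Section Basic.
Context {C : Category}.

Definition is_iso {x y : C} (f : hom x y) : Prop :=
  exists g : hom y x, g ∘ f = idm x /\ f ∘ g = idm y.

Definition is_initial (z : C) : Prop := forall x : C, exists! f : hom z x, True.
Definition is_terminal (t : C) : Prop := forall x : C, exists! f : hom x t, True.

Definition is_coproduct {a b s : C} (i1 : hom a s) (i2 : hom b s) : Prop :=
  forall (z : C) (u : hom a z) (v : hom b z),
    exists! w : hom s z, w ∘ i1 = u /\ w ∘ i2 = v.

Definition is_pushout {a b c P : C} (f : hom a b) (g : hom a c)
  (p : hom b P) (q : hom c P) : Prop :=
  p ∘ f = q ∘ g /\
  forall (z : C) (u : hom b z) (v : hom c z), u ∘ f = v ∘ g ->
    exists! w : hom P z, w ∘ p = u /\ w ∘ q = v.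

Definition is_pullback {a b c Q : C} (f : hom b a) (g : hom c a)
  (p : hom Q b) (q : hom Q c) : Prop :=
  f ∘ p = g ∘ q /\
  forall (z : C) (u : hom z b) (v : hom z c), f ∘ u = g ∘ v ->
    exists! w : hom z Q, p ∘ w = u /\ q ∘ w = v.

Definition llp {a b x y : C} (i : hom a b) (p : hom x y) : Prop :=
  forall (u : hom a x) (v : hom b y), p ∘ u = v ∘ i ->
    exists d : hom b x, d ∘ i = u /\ p ∘ d = v.

End Basic.

(* Small limits and colimits: diagrams indexed by categories whose
   objects and hom-types live in the universe of the hom-types of C. *)
Definition is_limit {J C : Category} (F : Functor J C) (L : C)
  (leg : forall j, hom L (F j)) : Prop :=
  (forall a b (u : hom a b), fm F u ∘ leg a = leg b) /\
  forall (z : C) (c : forall j, hom z (F j)),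
    (forall a b (u : hom a b), fm F u ∘ c a = c b) ->
    exists! w : hom z L, forall j, leg j ∘ w = c j.

Definition is_colimit {J C : Category} (F : Functor J C) (L : C)
  (leg : forall j, hom (F j) L) : Prop :=
  (forall a b (u : hom a b), leg b ∘ fm F u = leg a) /\
  forall (z : C) (c : forall j, hom (F j) z),
    (forall a b (u : hom a b), c b ∘ fm F u = c a) ->
    exists! w : hom L z, forall j, w ∘ leg j = c j.

Arguments is_limit {J C} F L leg.
Arguments is_colimit {J C} F L leg.

Definition complete@{o h +} (C : Category@{o h}) : Prop :=
  forall (J : Category@{h h}) (F : Functor J C),
    exists (L : C) (leg : forall j, hom L (F j)), is_limit F L leg.

Definition cocomplete@{o h +} (C : Category@{o h}) : Prop :=
  forall (J : Category@{h h}) (F : Functor J C),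
    exists (L : C) (leg : forall j, hom (F j) L), is_colimit F L leg.

Record MapSet@{o h} (C : Category@{o h}) := {
  ms_idx : Type@{h};
  ms_dom : ms_idx -> C;
  ms_cod : ms_idx -> C;
  ms_map : forall k, hom (ms_dom k) (ms_cod k)
}.
Arguments ms_map {C} I k : rename.

Definition MapClass (C : Category) := forall x y : C, hom x y -> Prop.

Section Lifting.
Context {C : Category} (I : MapSet C).

Definition is_fib {x y : C} (p : hom x y) : Prop :=
  forall k, llp (ms_map I k) p.

Definition is_cof {a b : C} (f : hom a b) : Prop :=
  forall (x y : C) (p : hom x y), is_fib p -> llp f p.

Definition is_cofibrant_obj (x : C) : Prop :=
  forall (z : C), is_initial z -> forall f : hom z x, is_cof f.

Definition is_fibrant_obj (x : C) : Prop :=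
  forall (t : C), is_terminal t -> forall f : hom x t, is_fib f.

Definition is_wfs : Prop :=
  forall (x y : C) (f : hom x y),
    exists (z : C) (g : hom x z) (h : hom z y), is_cof g /\ is_fib h /\ h ∘ g = f.

End Lifting.

Definition llp_fib_between_fibrant {C : Category} (J : MapSet C)
  {a b : C} (f : hom a b) : Prop :=
  forall (x y : C) (p : hom x y),
    is_fib J p -> is_fibrant_obj J x -> is_fibrant_obj J y -> llp f p.

Record Bifunctor (A C : Category) := {
  bo : A -> C -> C;
  bm : forall a a' c c', hom a a' -> hom c c' -> hom (bo a c) (bo a' c');
  bm_id : forall a c, bm (idm a) (idm c) = idm (bo a c);
  bm_comp : forall a a' a'' c c' c'' (f : hom a a') (f' : hom a' a'')
      (g : hom c c') (g' : hom c' c''),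
      bm (f' ∘ f) (g' ∘ g) = bm f' g' ∘ bm f g
}.
Arguments bo {A C} T : rename.
Arguments bm {A C} T {a a' c c'} : rename.

(* The functor given on objects by Fo and on maps by Fm has a right
   adjoint, expressed through its universal arrows (counits): for every
   object d an object G d and eps_d : F (G d) -> d through which every
   F c -> d factors uniquely. *)
Definition has_right_adjoint {X Y : Category} (Fo : X -> Y)
  (Fm : forall x x' : X, hom x x' -> hom (Fo x) (Fo x')) : Prop :=
  forall d : Y, exists (Gd : X) (eps : hom (Fo Gd) d),
    forall (c : X) (f : hom (Fo c) d),
      exists! g : hom c Gd, eps ∘ Fm c Gd g = f.

Arguments has_right_adjoint {X Y} Fo Fm.

Definition divisible_both_sides {A C : Category} (T : Bifunctor A C) : Prop :=
  (forall a : A, has_right_adjoint (fun c : C => bo T a c)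
                   (fun c c' (g : hom c c') => bm T (idm a) g)) /\
  (forall c : C, has_right_adjoint (fun a : A => bo T a c)
                   (fun a a' (f : hom a a') => bm T f (idm c))).

(* The corner product is the map from the pushout
   (X1 ⊙ Y2) ⊔_{X1 ⊙ X2} (Y1 ⊙ X2) to Y1 ⊙ Y2; the condition is
   stated for every choice of the pushout. *)
Definition corner_in {A C : Category} (T : Bifunctor A C)
  {X1 Y1 : A} {X2 Y2 : C} (f : hom X1 Y1) (g : hom X2 Y2)
  (K : forall (P Q : C), hom P Q -> Prop) : Prop :=
  forall (P : C) (p1 : hom (bo T X1 Y2) P) (p2 : hom (bo T Y1 X2) P),
    is_pushout (bm T (idm X1) g) (bm T f (idm X2)) p1 p2 ->
    forall k : hom P (bo T Y1 Y2),
      k ∘ p1 = bm T f (idm Y2) -> k ∘ p2 = bm T (idm Y1) g -> K P _ k.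

Definition corner_set_in {A C : Category} (T : Bifunctor A C)
  (S : MapSet A) (U : MapSet C) (K : forall (P Q : C), hom P Q -> Prop) : Prop :=
  forall (k : ms_idx S) (l : ms_idx U), corner_in T (ms_map S k) (ms_map U l) K.

(* Weak model categories (Henry's definition).                         *)
Section WeakModel.
Context {C : Category} (zero one : C) (Cof Fib : MapClass C).

Definition wcofibrant (x : C) : Prop := forall f : hom zero x, Cof f.
Definition wfibrant (x : C) : Prop := forall f : hom x one, Fib f.

Definition is_cofibration_class : Prop :=
  is_initial zero /\ Cof (idm zero) /\
  (forall (x y : C) (f : hom x y), is_iso f -> wcofibrant x -> Cof f) /\
  (forall (x y z : C) (f : hom x y) (g : hom y z), Cof f -> Cof g -> Cof (g ∘ f)) /\
  (forall (a b c : C) (i : hom a b) (g : hom a c),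
      Cof i -> wcofibrant a -> wcofibrant c ->
      exists (P : C) (p : hom b P) (q : hom c P), is_pushout i g p q /\ Cof q).

Definition is_fibration_class : Prop :=
  is_terminal one /\ Fib (idm one) /\
  (forall (x y : C) (f : hom x y), is_iso f -> wfibrant y -> Fib f) /\
  (forall (x y z : C) (f : hom x y) (g : hom y z), Fib f -> Fib g -> Fib (g ∘ f)) /\
  (forall (a b c : C) (p : hom b a) (g : hom c a),
      Fib p -> wfibrant a -> wfibrant c ->
      exists (Q : C) (q1 : hom Q b) (q2 : hom Q c), is_pullback p g q1 q2 /\ Fib q2).

Definition acyclic_fib {x y : C} (p : hom x y) : Prop :=
  Fib p /\ forall (a b : C) (i : hom a b),
    Cof i -> wcofibrant a -> wcofibrant b -> llp i p.

Definition acyclic_cof {a b : C} (i : hom a b) : Prop :=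
  Cof i /\ forall (x y : C) (p : hom x y),
    Fib p -> wfibrant x -> wfibrant y -> llp i p.

Definition has_rel_strong_cylinder {a b : C} (i : hom a b) : Prop :=
  exists (P : C) (p q : hom b P), is_pushout i i p q /\
  exists (Cyl : C) (j : hom P Cyl) (r : hom Cyl b),
    r ∘ j ∘ p = idm b /\ r ∘ j ∘ q = idm b /\
    Cof j /\ acyclic_cof (j ∘ p).

Definition has_rel_strong_path {y x : C} (p : hom y x) : Prop :=
  exists (Q : C) (q1 q2 : hom Q y), is_pullback p p q1 q2 /\
  exists (Pth : C) (s : hom y Pth) (t : hom Pth Q),
    q1 ∘ (t ∘ s) = idm y /\ q2 ∘ (t ∘ s) = idm y /\
    Fib t /\ acyclic_fib (q1 ∘ t).

Definition is_weak_model_structure : Prop :=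
  is_cofibration_class /\ is_fibration_class /\
  (forall (x y : C) (f : hom x y), wcofibrant x -> wfibrant y ->
     exists (z : C) (g : hom x z) (h : hom z y), Cof g /\ acyclic_fib h /\ h ∘ g = f) /\
  (forall (x y : C) (f : hom x y), wcofibrant x -> wfibrant y ->
     exists (z : C) (g : hom x z) (h : hom z y), acyclic_cof g /\ Fib h /\ h ∘ g = f) /\
  (forall (a b : C) (i : hom a b), Cof i -> wcofibrant a -> wfibrant b ->
     has_rel_strong_cylinder i) /\
  (forall (y x : C) (p : hom y x), Fib p -> wcofibrant y -> wfibrant x ->
     has_rel_strong_path p).

End WeakModel.

(* The cofibrations are the I-cofibrations between I-cofibrant objects and the
   fibrations the J-fibrations between J-fibrant objects; the factorizations come
   from the two weak factorization systems.  The real content is the existence of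
   relative strong cylinders and path objects, built from the interval of (viii):
   for a cofibration i : a -> b the cylinder is Cyl ⊙ b ⊔_{Cyl ⊙ a} D ⊙ a, and for a
   fibration p : y -> x the path object is [Cyl, y] ×_{[Cyl, x]} [D, x], where [-, -]
   is the right adjoint of (-) ⊙ c.  Their lifting properties reduce to (v) and
   (vi): a map g lifts against the pullback power <f, p> iff the corner product
   f ^⊙ g lifts against p, so lifting properties of corner products propagate from
   the generating sets to all cofibrations on either side. *)

From Stdlib Require Import Setoid Eqdep_dec Bool.
Set Universe Polymorphism.
Set Implicit Arguments.
Unset Strict Implicit.

Lemma eq_comp2_r {C : Category} {x y z : C} (f : hom y z) (g : hom x y) (R : hom x z) :
  f ∘ g = R -> forall w (k : hom w x), f ∘ (g ∘ k) = R ∘ k.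
Proof. intros <- w k. apply comp_assoc. Qed.

Lemma eq_comp3_r {C : Category} {x y y' z : C} (f : hom y' z) (g : hom y y') (h : hom x y)
  (R : hom x z) : f ∘ (g ∘ h) = R -> forall w (k : hom w x), f ∘ (g ∘ (h ∘ k)) = R ∘ k.
Proof. intros <- w k. rewrite !comp_assoc. reflexivity. Qed.

Tactic Notation "assoc_r" := repeat rewrite <- comp_assoc.
Tactic Notation "assoc_r" "in" hyp(H) := repeat rewrite <- comp_assoc in H.

(* [rewrite_chain H] rewrites with an equation [H] whose left side is a composite
   of up to three maps inside a right-associated composite, and re-associates. *)
Ltac rewrite_chain_with H :=
  let H' := fresh in
  pose proof H as H'; assoc_r in H';
  first [ rewrite H' | rewrite (eq_comp2_r H') | rewrite (eq_comp3_r H') ]; clear H';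
  assoc_r.
Tactic Notation "rewrite_chain" constr(H) := rewrite_chain_with H.
Tactic Notation "rewrite_chain" "<-" constr(H) := rewrite_chain_with (eq_sym H).

(** * Universal properties and finite limits *)

Section UniversalProperties.
Context {C : Category}.

Lemma initial_map_unique (o : C) : is_initial o -> forall w (m1 m2 : hom o w), m1 = m2.
Proof.
  intros Ho w m1 m2. destruct (Ho w) as [m [_ U]].
  rewrite <- (U m1 I). apply U. exact I.
Qed.

Lemma terminal_map_unique (t : C) : is_terminal t -> forall w (m1 m2 : hom w t), m1 = m2.
Proof.
  intros Ht w m1 m2. destruct (Ht w) as [m [_ U]].
  rewrite <- (U m1 I). apply U. exact I.
Qed.

Lemma idm_iso (x : C) : is_iso (idm x).
Proof. exists (idm x). split; apply comp_id_l. Qed.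

Lemma initial_iso (o o' : C) (f : hom o o') : is_initial o -> is_initial o' -> is_iso f.
Proof.
  intros Ho Ho'. destruct (Ho' o) as [g _].
  exists g. split; apply initial_map_unique; assumption.
Qed.

Lemma terminal_iso (t t' : C) (f : hom t t') : is_terminal t -> is_terminal t' -> is_iso f.
Proof.
  intros Ht Ht'. destruct (Ht t') as [g _].
  exists g. split; apply terminal_map_unique; assumption.
Qed.

Section Pushout.
Context {a b c P : C} {f : hom a b} {g : hom a c} {p : hom b P} {q : hom c P}.
Hypothesis HP : is_pushout f g p q.

Lemma pushout_factor {w : C} (u : hom b w) (v : hom c w) :
  u ∘ f = v ∘ g -> exists m, m ∘ p = u /\ m ∘ q = v.
Proof. intros E. destruct (proj2 HP w u v E) as [m [Hm _]]. eauto. Qed.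

Lemma pushout_ext {w : C} (m1 m2 : hom P w) :
  m1 ∘ p = m2 ∘ p -> m1 ∘ q = m2 ∘ q -> m1 = m2.
Proof.
  intros E1 E2. destruct (proj2 HP w (m1 ∘ p) (m1 ∘ q)) as [m [_ U]].
  { rewrite <- !comp_assoc, (proj1 HP). reflexivity. }
  rewrite <- (U m1) by (split; reflexivity). apply U. split; symmetry; assumption.
Qed.

Lemma pushout_factor_over {X Y : C} (pi : hom X Y) (v : hom P Y)
  (u1 : hom b X) (u2 : hom c X) :
  u1 ∘ f = u2 ∘ g -> pi ∘ u1 = v ∘ p -> pi ∘ u2 = v ∘ q ->
  exists m, m ∘ p = u1 /\ m ∘ q = u2 /\ pi ∘ m = v.
Proof.
  intros E E1 E2. destruct (pushout_factor E) as [m [Hm1 Hm2]].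
  exists m. split; [exact Hm1|split; [exact Hm2|]].
  apply pushout_ext; rewrite <- comp_assoc; [rewrite Hm1 | rewrite Hm2]; assumption.
Qed.

Lemma pushout_sym : is_pushout g f q p.
Proof.
  split; [symmetry; exact (proj1 HP)|]. intros z u v E.
  destruct (proj2 HP z v u (eq_sym E)) as [m [[H1 H2] U]].
  exists m. split; [split; assumption|]. intros m' [H1' H2']. apply U. split; assumption.
Qed.

End Pushout.

Section Pullback.
Context {a b c Q : C} {f : hom b a} {g : hom c a} {p : hom Q b} {q : hom Q c}.
Hypothesis HQ : is_pullback f g p q.

Lemma pullback_factor {w : C} (u : hom w b) (v : hom w c) :
  f ∘ u = g ∘ v -> exists m, p ∘ m = u /\ q ∘ m = v.
Proof. intros E. destruct (proj2 HQ w u v E) as [m [Hm _]]. eauto. Qed.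

Lemma pullback_ext {w : C} (m1 m2 : hom w Q) :
  p ∘ m1 = p ∘ m2 -> q ∘ m1 = q ∘ m2 -> m1 = m2.
Proof.
  intros E1 E2. destruct (proj2 HQ w (p ∘ m1) (q ∘ m1)) as [m [_ U]].
  { rewrite !comp_assoc, (proj1 HQ). reflexivity. }
  rewrite <- (U m1) by (split; reflexivity). apply U. split; symmetry; assumption.
Qed.

Lemma pullback_sym : is_pullback g f q p.
Proof.
  split; [symmetry; exact (proj1 HQ)|]. intros z u v E.
  destruct (proj2 HQ z v u (eq_sym E)) as [m [[H1 H2] U]].
  exists m. split; [split; assumption|]. intros m' [H1' H2']. apply U. split; assumption.
Qed.

End Pullback.

Lemma coproduct_ext {a b s z : C} (i1 : hom a s) (i2 : hom b s) :
  is_coproduct i1 i2 -> forall m1 m2 : hom s z,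
  m1 ∘ i1 = m2 ∘ i1 -> m1 ∘ i2 = m2 ∘ i2 -> m1 = m2.
Proof.
  intros H m1 m2 E1 E2. destruct (H z (m1 ∘ i1) (m1 ∘ i2)) as [m [_ U]].
  rewrite <- (U m1) by (split; reflexivity). apply U. split; symmetry; assumption.
Qed.

End UniversalProperties.

Inductive span_vertex : Set := Apex | Leg1 | Leg2.

Definition span_arrow (x y : span_vertex) : bool :=
  match x, y with
  | Apex, _ | Leg1, Leg1 | Leg2, Leg2 => true
  | _, _ => false
  end.

Lemma span_arrow_refl x : span_arrow x x = true.
Proof. destruct x; reflexivity. Qed.

Lemma span_arrow_trans x y z :
  span_arrow x y = true -> span_arrow y z = true -> span_arrow x z = true.
Proof. destruct x, y, z; simpl; auto. Qed.

Lemma bool_eq_proof_irrelevance (b : bool) (e1 e2 : b = true) : e1 = e2.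
Proof. apply UIP_dec, bool_dec. Qed.

Definition SpanCat@{h} : Category@{h h}.
Proof.
  refine {| ob := span_vertex; hom := fun x y => span_arrow x y = true;
            idm := span_arrow_refl; comp := fun x y z g f => span_arrow_trans f g |}.
  all: intros; apply bool_eq_proof_irrelevance.
Defined.

Definition CospanCat@{h} : Category@{h h}.
Proof.
  refine {| ob := span_vertex; hom := fun x y => span_arrow y x = true;
            idm := span_arrow_refl; comp := fun x y z g f => span_arrow_trans g f |}.
  all: intros; apply bool_eq_proof_irrelevance.
Defined.

Definition EmptyCat@{h} : Category@{h h}.
Proof.
  refine {| ob := Empty_set; hom := fun _ _ => unit;
            idm := fun _ => tt; comp := fun _ _ _ _ _ => tt |}.
  all: intros [].
Defined.

Definition has_pushouts (C : Category) : Prop :=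
  forall (a b c : C) (f : hom a b) (g : hom a c),
    exists P (p : hom b P) (q : hom c P), is_pushout f g p q.

Definition has_pullbacks (C : Category) : Prop :=
  forall (a b c : C) (f : hom b a) (g : hom c a),
    exists Q (p : hom Q b) (q : hom Q c), is_pullback f g p q.

Section FiniteLimits.
Universes o h.
Context {C : Category@{o h}}.

Definition span_obj (a b c : C) (v : span_vertex) : C :=
  match v with Apex => a | Leg1 => b | Leg2 => c end.

Definition span_map {a b c : C} (f : hom a b) (g : hom a c) (x y : span_vertex) :
  span_arrow x y = true -> hom (span_obj a b c x) (span_obj a b c y) :=
  match x, y with
  | Apex, Apex => fun _ => idm a
  | Apex, Leg1 => fun _ => f
  | Apex, Leg2 => fun _ => g
  | Leg1, Leg1 => fun _ => idm b
  | Leg2, Leg2 => fun _ => idm c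
  | _, _ => fun e => False_rect _ (diff_false_true e)
  end.

Definition cospan_map {a b c : C} (f : hom b a) (g : hom c a) (x y : span_vertex) :
  span_arrow y x = true -> hom (span_obj a b c x) (span_obj a b c y) :=
  match x, y with
  | Apex, Apex => fun _ => idm a
  | Leg1, Apex => fun _ => f
  | Leg2, Apex => fun _ => g
  | Leg1, Leg1 => fun _ => idm b
  | Leg2, Leg2 => fun _ => idm c
  | _, _ => fun e => False_rect _ (diff_false_true e)
  end.

Definition span_diagram {a b c : C} (f : hom a b) (g : hom a c) : Functor SpanCat@{h} C.
Proof.
  refine (@Build_Functor SpanCat@{h} C (span_obj a b c) (span_map f g) _ _).
  - intros x; destruct x; reflexivity.
  - intros x y z u v; destruct x, y, z; simpl in *; try discriminate;
      rewrite ?comp_id_l, ?comp_id_r; reflexivity.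
Defined.

Definition cospan_diagram {a b c : C} (f : hom b a) (g : hom c a) : Functor CospanCat@{h} C.
Proof.
  refine (@Build_Functor CospanCat@{h} C (span_obj a b c) (cospan_map f g) _ _).
  - intros x; destruct x; reflexivity.
  - intros x y z u v; destruct x, y, z; simpl in *; try discriminate;
      rewrite ?comp_id_l, ?comp_id_r; reflexivity.
Defined.

Definition empty_diagram : Functor EmptyCat@{h} C.
Proof.
  refine (@Build_Functor EmptyCat@{h} C (fun e => match e with end)
            (fun e => match e with end) _ _).
  all: intros [].
Defined.

Lemma cocomplete_has_pushouts : cocomplete C -> has_pushouts C.
Proof.
  intros cc a b c f g.
  destruct (cc SpanCat@{h} (span_diagram f g)) as [L [leg [Hc Hu]]].
  exists L, (leg Leg1), (leg Leg2).
  assert (E1 : leg Leg1 ∘ f = leg Apex) by exact (Hc Apex Leg1 eq_refl).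
  assert (E2 : leg Leg2 ∘ g = leg Apex) by exact (Hc Apex Leg2 eq_refl).
  split; [exact (eq_trans E1 (eq_sym E2))|].
  intros z u v Huv.
  destruct (Hu z (fun j => match j return hom (span_obj a b c j) z with
                           | Apex => u ∘ f | Leg1 => u | Leg2 => v end)) as [w [Hw Hwu]].
  { intros x y e; destruct x, y; simpl in *; try discriminate;
      rewrite ?comp_id_r; auto. }
  exists w. split; [split; [exact (Hw Leg1) | exact (Hw Leg2)]|].
  intros w' [H1 H2]. apply Hwu. intros []; simpl; auto.
  rewrite <- H1, <- E1. apply comp_assoc.
Qed.

Lemma complete_has_pullbacks : complete C -> has_pullbacks C.
Proof.
  intros cc a b c f g.
  destruct (cc CospanCat@{h} (cospan_diagram f g)) as [L [leg [Hc Hu]]].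
  exists L, (leg Leg1), (leg Leg2).
  assert (E1 : f ∘ leg Leg1 = leg Apex) by exact (Hc Leg1 Apex eq_refl).
  assert (E2 : g ∘ leg Leg2 = leg Apex) by exact (Hc Leg2 Apex eq_refl).
  split; [exact (eq_trans E1 (eq_sym E2))|].
  intros z u v Huv.
  destruct (Hu z (fun j => match j return hom z (span_obj a b c j) with
                           | Apex => f ∘ u | Leg1 => u | Leg2 => v end)) as [w [Hw Hwu]].
  { intros x y e; destruct x, y; simpl in *; try discriminate;
      rewrite ?comp_id_l; auto. }
  exists w. split; [split; [exact (Hw Leg1) | exact (Hw Leg2)]|].
  intros w' [H1 H2]. apply Hwu. intros []; simpl; auto.
  rewrite <- H1, <- E1. symmetry. apply comp_assoc.
Qed.

Lemma cocomplete_has_initial : cocomplete C -> exists z : C, is_initial z.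
Proof.
  intros cc. destruct (cc EmptyCat@{h} empty_diagram) as [L [leg [_ Hu]]].
  exists L. intros x. destruct (Hu x (fun e => match e with end)) as [w [_ Hw]].
  - intros [].
  - exists w. split; [exact I|]. intros w' _. apply Hw. intros [].
Qed.

Lemma complete_has_terminal : complete C -> exists t : C, is_terminal t.
Proof.
  intros cc. destruct (cc EmptyCat@{h} empty_diagram) as [L [leg [_ Hu]]].
  exists L. intros x. destruct (Hu x (fun e => match e with end)) as [w [_ Hw]].
  - intros [].
  - exists w. split; [exact I|]. intros w' _. apply Hw. intros [].
Qed.

End FiniteLimits.

(** * Lifting properties *)

Section Lifting.
Context {C : Category}.

Lemma llp_comp_l {a b c x y : C} (f : hom a b) (g : hom b c) (p : hom x y) :
  llp f p -> llp g p -> llp (g ∘ f) p.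
Proof.
  intros Hf Hg u v E.
  destruct (Hf u (v ∘ g)) as [d1 [H1 H2]]. { rewrite E. apply comp_assoc. }
  destruct (Hg d1 v H2) as [d2 [H3 H4]].
  exists d2. split; [rewrite comp_assoc, H3; exact H1 | exact H4].
Qed.

Lemma llp_comp_r {a b x y w : C} (i : hom a b) (p : hom x y) (q : hom y w) :
  llp i p -> llp i q -> llp i (q ∘ p).
Proof.
  intros Hp Hq u v E.
  destruct (Hq (p ∘ u) v) as [d1 [H1 H2]]. { rewrite <- E. apply comp_assoc. }
  destruct (Hp u d1 (eq_sym H1)) as [d2 [H3 H4]].
  exists d2. split; [exact H3 | rewrite <- comp_assoc, H4; exact H2].
Qed.

Lemma llp_pushout {a b c P x y : C} (i : hom a b) (g : hom a c) (i' : hom b P) (q : hom c P)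
  (p : hom x y) : is_pushout i g i' q -> llp i p -> llp q p.
Proof.
  intros HP Hi u v E.
  destruct (Hi (u ∘ g) (v ∘ i')) as [d [H1 H2]].
  { rewrite comp_assoc, E, <- !comp_assoc, (proj1 HP). reflexivity. }
  destruct (pushout_factor_over HP H1 H2 E) as [m [_ [Hm Hpm]]].
  exists m. split; assumption.
Qed.

Lemma llp_pullback {a b c Q x y : C} (f : hom b a) (g : hom c a) (q1 : hom Q b) (q2 : hom Q c)
  (i : hom x y) : is_pullback f g q1 q2 -> llp i f -> llp i q2.
Proof.
  intros HQ Hi u v E.
  destruct (Hi (q1 ∘ u) (g ∘ v)) as [d [H1 H2]].
  { rewrite <- comp_assoc, <- E, !comp_assoc, (proj1 HQ). reflexivity. }
  destruct (pullback_factor HQ H2) as [m [Hm1 Hm2]].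
  exists m. split; [|exact Hm2].
  apply (pullback_ext HQ); rewrite comp_assoc; [rewrite Hm1 | rewrite Hm2]; auto.
Qed.

Lemma llp_iso_l {a b x y : C} (f : hom a b) (p : hom x y) : is_iso f -> llp f p.
Proof.
  intros [g [H1 H2]] u v E. exists (u ∘ g). split.
  - rewrite <- comp_assoc, H1, comp_id_r. reflexivity.
  - rewrite comp_assoc, E, <- comp_assoc, H2, comp_id_r. reflexivity.
Qed.

Lemma llp_iso_r {a b x y : C} (f : hom a b) (p : hom x y) : is_iso p -> llp f p.
Proof.
  intros [g [H1 H2]] u v E. exists (g ∘ v). split.
  - rewrite <- comp_assoc, <- E, comp_assoc, H1, comp_id_l. reflexivity.
  - rewrite comp_assoc, H2, comp_id_l. reflexivity.
Qed.

Definition extends_along {a b : C} (i : hom a b) (z : C) : Prop :=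
  forall u : hom a z, exists v : hom b z, v ∘ i = u.

Lemma llp_terminal_iff {a b z t : C} (i : hom a b) (h : hom z t) :
  is_terminal t -> llp i h <-> extends_along i z.
Proof.
  intros Ht. split.
  - intros L u. destruct (Ht b) as [v _].
    destruct (L u v) as [e [He _]]; [apply terminal_map_unique; exact Ht|]. eauto.
  - intros Ext u v _. destruct (Ext u) as [e He].
    exists e. split; [exact He | apply terminal_map_unique; exact Ht].
Qed.

Section MapSet.
Context (I : MapSet C).

Lemma cof_comp {a b c : C} (f : hom a b) (g : hom b c) :
  is_cof I f -> is_cof I g -> is_cof I (g ∘ f).
Proof. intros Hf Hg x y p Hp. apply llp_comp_l; auto. Qed.

Lemma fib_comp {a b c : C} (f : hom a b) (g : hom b c) :
  is_fib I f -> is_fib I g -> is_fib I (g ∘ f).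
Proof. intros Hf Hg k. apply llp_comp_r; auto. Qed.

Lemma cof_pushout {a b c P : C} (i : hom a b) (g : hom a c) (i' : hom b P) (q : hom c P) :
  is_pushout i g i' q -> is_cof I i -> is_cof I q.
Proof. intros HP Hi x y p Hp. exact (llp_pushout HP (Hi x y p Hp)). Qed.

Lemma fib_pullback {a b c Q : C} (f : hom b a) (g : hom c a) (q1 : hom Q b) (q2 : hom Q c) :
  is_pullback f g q1 q2 -> is_fib I f -> is_fib I q2.
Proof. intros HQ Hf k. exact (llp_pullback HQ (Hf k)). Qed.

Lemma cof_iso {a b : C} (f : hom a b) : is_iso f -> is_cof I f.
Proof. intros H x y p _. apply llp_iso_l; exact H. Qed.

Lemma fib_iso {a b : C} (f : hom a b) : is_iso f -> is_fib I f.
Proof. intros H k. apply llp_iso_r; exact H. Qed.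

Lemma cofibrant_obj_initial (o : C) : is_initial o -> is_cofibrant_obj I o.
Proof. intros Ho z Hz f. apply cof_iso, initial_iso; assumption. Qed.

Lemma fibrant_obj_terminal (t : C) : is_terminal t -> is_fibrant_obj I t.
Proof. intros Ht z Hz f. apply fib_iso, terminal_iso; assumption. Qed.

Lemma cofibrant_obj_cod {x y : C} (f : hom x y) :
  is_cof I f -> is_cofibrant_obj I x -> is_cofibrant_obj I y.
Proof.
  intros Hf Hx z Hz g. destruct (Hz x) as [u _].
  replace g with (f ∘ u) by (apply initial_map_unique; exact Hz).
  apply cof_comp; [apply Hx|]; assumption.
Qed.

Lemma fibrant_obj_dom {x y : C} (f : hom x y) :
  is_fib I f -> is_fibrant_obj I y -> is_fibrant_obj I x.
Proof.
  intros Hf Hy z Hz g. destruct (Hz y) as [u _].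
  replace g with (u ∘ f) by (apply terminal_map_unique; exact Hz).
  apply fib_comp; [|apply Hy]; assumption.
Qed.

Lemma fibrant_obj_of_extends (x : C) :
  (forall k, extends_along (ms_map I k) x) -> is_fibrant_obj I x.
Proof. intros Ext t Ht h k. apply (llp_terminal_iff _ _ Ht), Ext. Qed.

End MapSet.

Section Inclusion.
Context (I J : MapSet C) (J_sub : forall l, is_cof I (ms_map J l)).

Lemma fib_incl {x y : C} (p : hom x y) : is_fib I p -> is_fib J p.
Proof. intros Hp l. apply J_sub, Hp. Qed.

Lemma cof_incl {a b : C} (f : hom a b) : is_cof J f -> is_cof I f.
Proof. intros Hf x y p Hp. apply Hf, fib_incl, Hp. Qed.

End Inclusion.

Definition cof_between_cofibrant (I : MapSet C) {x y : C} (f : hom x y) : Prop :=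
  is_cof I f /\ is_cofibrant_obj I x /\ is_cofibrant_obj I y.

Definition fib_between_fibrant (J : MapSet C) {x y : C} (f : hom x y) : Prop :=
  is_fib J f /\ is_fibrant_obj J x /\ is_fibrant_obj J y.

Lemma fib_between_fibrant_terminal (J : MapSet C) {x t : C} (h : hom x t) :
  is_terminal t -> is_fibrant_obj J x -> fib_between_fibrant J h.
Proof.
  intros Ht Hx. split; [exact (Hx t Ht h)|split; [exact Hx|]].
  apply fibrant_obj_terminal; exact Ht.
Qed.

End Lifting.

Definition cof_class {C : Category} (I : MapSet C) : MapClass C :=
  fun x y (f : hom x y) => cof_between_cofibrant I f.

Definition fib_class {C : Category} (J : MapSet C) : MapClass C :=
  fun x y (f : hom x y) => fib_between_fibrant J f.

Arguments cof_class {C} I x y f.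
Arguments fib_class {C} J x y f.

(** * Functors of two variables and corner maps *)

(* Unlike [Bifunctor A C], the codomain is arbitrary, so that the variables can be swapped. *)
Record Functor2 (X Y Z : Category) := {
  app2 : X -> Y -> Z;
  map2 : forall x x' y y', hom x x' -> hom y y' -> hom (app2 x y) (app2 x' y');
  map2_id : forall x y, map2 (idm x) (idm y) = idm (app2 x y);
  map2_comp : forall x x' x'' y y' y'' (f : hom x x') (f' : hom x' x'')
      (g : hom y y') (g' : hom y' y''),
      map2 (f' ∘ f) (g' ∘ g) = map2 f' g' ∘ map2 f g
}.
Arguments app2 {X Y Z} B : rename.
Arguments map2 {X Y Z} B {x x' y y'} : rename.

Definition functor2_of_bifunctor {A C : Category} (T : Bifunctor A C) : Functor2 A C C :=
  {| app2 := bo T; map2 := fun a a' c c' => @bm A C T a a' c c';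
     map2_id := bm_id T; map2_comp := bm_comp T |}.

Definition swap2 {X Y Z : Category} (B : Functor2 X Y Z) : Functor2 Y X Z.
Proof.
  refine {| app2 := fun y x => app2 B x y; map2 := fun y y' x x' g f => map2 B f g |}.
  - intros; apply map2_id.
  - intros; apply map2_comp.
Defined.

Section Functor2Facts.
Context {X Y Z : Category} (B : Functor2 X Y Z).

Lemma map2_comp_l {x x' x'' : X} (y : Y) (f : hom x x') (f' : hom x' x'') :
  map2 B f' (idm y) ∘ map2 B f (idm y) = map2 B (f' ∘ f) (idm y).
Proof. rewrite <- map2_comp, comp_id_l. reflexivity. Qed.

Lemma map2_comp_r (x : X) {y y' y'' : Y} (g : hom y y') (g' : hom y' y'') :
  map2 B (idm x) g' ∘ map2 B (idm x) g = map2 B (idm x) (g' ∘ g).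
Proof. rewrite <- map2_comp, comp_id_l. reflexivity. Qed.

Lemma map2_interchange {x x' : X} {y y' : Y} (f : hom x x') (g : hom y y') :
  map2 B f (idm y') ∘ map2 B (idm x) g = map2 B (idm x') g ∘ map2 B f (idm y).
Proof. rewrite <- !map2_comp, !comp_id_l, !comp_id_r. reflexivity. Qed.

(* [G] is the internal hom [[x, z]] and [eps] its evaluation map. *)
Definition couniversal {x : X} {z : Z} {G : Y} (eps : hom (app2 B x G) z) : Prop :=
  forall y (h : hom (app2 B x y) z), exists! g : hom y G, eps ∘ map2 B (idm x) g = h.

Section Couniversal.
Context {x : X} {z : Z} {G : Y} {eps : hom (app2 B x G) z} (U : couniversal eps).

Lemma couniversal_factor {y : Y} (h : hom (app2 B x y) z) :
  exists g, eps ∘ map2 B (idm x) g = h.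
Proof. destruct (@U y h) as [g [Hg _]]. eauto. Qed.

Lemma couniversal_ext {y : Y} (g1 g2 : hom y G) :
  eps ∘ map2 B (idm x) g1 = eps ∘ map2 B (idm x) g2 -> g1 = g2.
Proof.
  intros E. destruct (@U y (eps ∘ map2 B (idm x) g1)) as [g [_ Ug]].
  rewrite <- (Ug g1 eq_refl). apply Ug. symmetry; exact E.
Qed.

Lemma couniversal_extends {a b : Y} (j : hom a b) :
  extends_along (map2 B (idm x) j) z -> extends_along j G.
Proof.
  intros Ext u. destruct (Ext (eps ∘ map2 B (idm x) u)) as [v Hv].
  destruct (couniversal_factor v) as [w Hw]. exists w.
  apply couniversal_ext. rewrite <- map2_comp_r. assoc_r. rewrite_chain Hw. exact Hv.
Qed.

End Couniversal.

Lemma left_adjoint_initial (x : X) (o : Y) :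
  (forall z : Z, exists (G : Y) (eps : hom (app2 B x G) z), couniversal eps) ->
  is_initial o -> is_initial (app2 B x o).
Proof.
  intros radj Ho z. destruct (radj z) as [G [eps U]]. destruct (Ho G) as [g _].
  exists (eps ∘ map2 B (idm x) g). split; [exact I|].
  intros m _. destruct (couniversal_factor U m) as [g' <-].
  do 2 f_equal. apply initial_map_unique; exact Ho.
Qed.

Lemma left_adjoint_coproduct (x : X) {a b s : Y} (i1 : hom a s) (i2 : hom b s) :
  (forall z : Z, exists (G : Y) (eps : hom (app2 B x G) z), couniversal eps) ->
  is_coproduct i1 i2 -> is_coproduct (map2 B (idm x) i1) (map2 B (idm x) i2).
Proof.
  intros radj Hc z u v. destruct (radj z) as [G [eps U]].
  destruct (couniversal_factor U u) as [u' Hu].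
  destruct (couniversal_factor U v) as [v' Hv].
  destruct (Hc G u' v') as [w [[Hw1 Hw2] _]].
  exists (eps ∘ map2 B (idm x) w). split.
  - split; rewrite <- comp_assoc, map2_comp_r; [rewrite Hw1 | rewrite Hw2]; assumption.
  - intros m [Hm1 Hm2]. destruct (couniversal_factor U m) as [m' <-].
    do 2 f_equal. apply (coproduct_ext Hc); apply (couniversal_ext U);
      [rewrite Hw1, Hu | rewrite Hw2, Hv];
      rewrite <- map2_comp_r, comp_assoc; symmetry; assumption.
Qed.

(* [k] ranges over the corner maps [f ^⊙ g], one for each choice of the pushout. *)
Definition corner_llp {x1 y1 : X} {x2 y2 : Y} (f : hom x1 y1) (g : hom x2 y2)
  {z z' : Z} (p : hom z z') : Prop :=
  forall (P : Z) (p1 : hom (app2 B x1 y2) P) (p2 : hom (app2 B y1 x2) P),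
    is_pushout (map2 B (idm x1) g) (map2 B f (idm x2)) p1 p2 ->
    forall k : hom P (app2 B y1 y2),
      k ∘ p1 = map2 B f (idm y2) -> k ∘ p2 = map2 B (idm y1) g -> llp k p.

Lemma corner_llp_initial {x1 y1 : X} (f : hom x1 y1) {o y : Y} (g0 : hom o y)
  {z z' : Z} (p : hom z z') :
  is_initial (app2 B x1 o) -> is_initial (app2 B y1 o) ->
  corner_llp f g0 p -> llp (map2 B f (idm y)) p.
Proof.
  intros H1 H2 Hc. destruct (H2 (app2 B x1 y)) as [p2 _].
  apply (Hc (app2 B x1 y) (idm _) p2).
  - split; [rewrite comp_id_l; apply initial_map_unique; exact H1|].
    intros w u v _. exists u. split; [split; [apply comp_id_r | apply initial_map_unique, H2]|].
    intros w' [E _]. rewrite comp_id_r in E. symmetry; exact E.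
  - apply comp_id_r.
  - apply initial_map_unique; exact H2.
Qed.

End Functor2Facts.

Lemma corner_llp_swap {X Y Z : Category} (B : Functor2 X Y Z) {x1 y1 : X} {x2 y2 : Y}
  (f : hom x1 y1) (g : hom x2 y2) {z z' : Z} (p : hom z z') :
  corner_llp (swap2 B) g f p <-> corner_llp B f g p.
Proof.
  split; intros H P p1 p2 HP k H1 H2; apply (H P p2 p1); auto; apply pushout_sym; exact HP.
Qed.

(** * Pullback powers *)

Section PullbackPower.
Context {X Y Z : Category} (B : Functor2 X Y Z) {x1 y1 : X} (f : hom x1 y1)
  {z z' : Z} (p : hom z z').

(* [W] is the pullback [[x1, z] ×_[x1, z'] [y1, z']] of internal homs, the target of
   the pullback power [<f, p> : [y1, z] -> W] (the map [pi] below); maps [u] into [W]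
   amount to the compatible pairs [(pp_fst u, pp_snd u)]. *)
Context {Hxz : Y} {exz : hom (app2 B x1 Hxz) z} (Uxz : couniversal exz)
  {Hxz' : Y} {exz' : hom (app2 B x1 Hxz') z'} (Uxz' : couniversal exz')
  {Hyz' : Y} {eyz' : hom (app2 B y1 Hyz') z'} (Uyz' : couniversal eyz')
  {m1 : hom Hxz Hxz'} (Hm1 : exz' ∘ map2 B (idm x1) m1 = p ∘ exz)
  {m2 : hom Hyz' Hxz'} (Hm2 : exz' ∘ map2 B (idm x1) m2 = eyz' ∘ map2 B f (idm Hyz'))
  {W : Y} {w1 : hom W Hxz} {w2 : hom W Hyz'} (HW : is_pullback m1 m2 w1 w2).

Definition pp_fst {w : Y} (u : hom w W) : hom (app2 B x1 w) z :=
  exz ∘ map2 B (idm x1) (w1 ∘ u).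

Definition pp_snd {w : Y} (u : hom w W) : hom (app2 B y1 w) z' :=
  eyz' ∘ map2 B (idm y1) (w2 ∘ u).

Lemma pp_fst_comp {w w' : Y} (u : hom w W) (g : hom w' w) :
  pp_fst (u ∘ g) = pp_fst u ∘ map2 B (idm x1) g.
Proof. unfold pp_fst. rewrite <- comp_assoc, map2_comp_r, comp_assoc. reflexivity. Qed.

Lemma pp_snd_comp {w w' : Y} (u : hom w W) (g : hom w' w) :
  pp_snd (u ∘ g) = pp_snd u ∘ map2 B (idm y1) g.
Proof. unfold pp_snd. rewrite <- comp_assoc, map2_comp_r, comp_assoc. reflexivity. Qed.

Lemma pp_compat {w : Y} (u : hom w W) :
  p ∘ pp_fst u = pp_snd u ∘ map2 B f (idm w).
Proof.
  unfold pp_fst, pp_snd. rewrite_chain <- Hm1. rewrite map2_comp_r, comp_assoc, (proj1 HW).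
  rewrite <- !comp_assoc, <- map2_comp_r. rewrite_chain Hm2.
  rewrite map2_interchange. reflexivity.
Qed.

Lemma pp_ext {w : Y} (u u' : hom w W) :
  pp_fst u = pp_fst u' -> pp_snd u = pp_snd u' -> u = u'.
Proof.
  intros E1 E2. apply (pullback_ext HW).
  - exact (couniversal_ext Uxz E1).
  - exact (couniversal_ext Uyz' E2).
Qed.

Lemma pp_intro {w : Y} (gam : hom (app2 B x1 w) z) (del : hom (app2 B y1 w) z') :
  p ∘ gam = del ∘ map2 B f (idm w) -> exists u, pp_fst u = gam /\ pp_snd u = del.
Proof.
  intros E. destruct (couniversal_factor Uxz gam) as [a Ha].
  destruct (couniversal_factor Uyz' del) as [b Hb].
  assert (Eab : m1 ∘ a = m2 ∘ b).
  { apply (couniversal_ext Uxz'). rewrite <- !map2_comp_r. assoc_r.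
    rewrite_chain Hm1. rewrite_chain Hm2. rewrite Ha, map2_interchange.
    rewrite_chain Hb. exact E. }
  destruct (pullback_factor HW Eab) as [u [Hu1 Hu2]].
  exists u. unfold pp_fst, pp_snd. rewrite Hu1, Hu2. split; assumption.
Qed.

Context {Hyz : Y} {eyz : hom (app2 B y1 Hyz) z} (Uyz : couniversal eyz)
  {pi : hom Hyz W} (Hpi1 : pp_fst pi = eyz ∘ map2 B f (idm Hyz)) (Hpi2 : pp_snd pi = p ∘ eyz).

Lemma corner_llp_of_llp_pp {y y' : Y} (g : hom y y') : llp g pi -> corner_llp B f g p.
Proof.
  intros L P p1 p2 HP k Hk1 Hk2 a b Hab.
  destruct (couniversal_factor Uyz (a ∘ p2)) as [u Hu].
  destruct (@pp_intro _ (a ∘ p1) b) as [v [Hv1 Hv2]].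
  { rewrite comp_assoc, Hab, <- comp_assoc, Hk1. reflexivity. }
  assert (Sq : pi ∘ u = v ∘ g).
  { apply pp_ext.
    - rewrite pp_fst_comp, pp_fst_comp, Hpi1, Hv1. assoc_r.
      rewrite map2_interchange. rewrite_chain Hu. rewrite (proj1 HP). reflexivity.
    - rewrite pp_snd_comp, pp_snd_comp, Hpi2, Hv2. assoc_r. rewrite Hu.
      rewrite <- Hk2. assoc_r. rewrite_chain Hab. reflexivity. }
  destruct (L u v Sq) as [e [He1 He2]].
  exists (eyz ∘ map2 B (idm y1) e). split.
  - apply (pushout_ext HP).
    + assoc_r. rewrite Hk1, <- map2_interchange. rewrite_chain <- Hpi1.
      rewrite <- pp_fst_comp, He2. exact Hv1.
    + assoc_r. rewrite Hk2, map2_comp_r, He1. exact Hu.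
  - rewrite comp_assoc, <- Hpi2, <- pp_snd_comp, He2. exact Hv2.
Qed.

Lemma llp_pp_of_corner_llp (poZ : has_pushouts Z) {y y' : Y} (g : hom y y') :
  corner_llp B f g p -> llp g pi.
Proof.
  intros Cn u v Sq.
  destruct (poZ _ _ _ (map2 B (idm x1) g) (map2 B f (idm y))) as [P [p1 [p2 HP]]].
  destruct (pushout_factor HP (map2_interchange B f g)) as [k [Hk1 Hk2]].
  destruct (pushout_factor HP (u := pp_fst v) (v := eyz ∘ map2 B (idm y1) u)) as [a [Ha1 Ha2]].
  { rewrite <- pp_fst_comp, <- Sq, pp_fst_comp, Hpi1. assoc_r.
    rewrite map2_interchange. reflexivity. }
  assert (Sq2 : p ∘ a = pp_snd v ∘ k).
  { apply (pushout_ext HP); assoc_r.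
    - rewrite Ha1, Hk1. apply pp_compat.
    - rewrite Ha2, Hk2, <- pp_snd_comp, <- Sq, pp_snd_comp, Hpi2. assoc_r. reflexivity. }
  destruct (Cn P p1 p2 HP k Hk1 Hk2 a _ Sq2) as [dd [Hd1 Hd2]].
  destruct (couniversal_factor Uyz dd) as [e He].
  assert (Hek : eyz ∘ map2 B (idm y1) e ∘ k = a) by (rewrite He; exact Hd1).
  exists e. split.
  - apply (couniversal_ext Uyz). rewrite <- map2_comp_r, <- Hk2. assoc_r.
    rewrite_chain Hek. exact Ha2.
  - apply pp_ext.
    + rewrite pp_fst_comp, Hpi1. assoc_r. rewrite map2_interchange, <- Hk1.
      assoc_r. rewrite_chain Hek. exact Ha1.
    + rewrite pp_snd_comp, Hpi2. assoc_r. rewrite_chain He. exact Hd2.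
Qed.

Lemma pp_extends {a b : Y} (j : hom a b) :
  extends_along (map2 B (idm y1) j) z' -> llp (map2 B (idm x1) j) p -> extends_along j W.
Proof.
  intros Ext L u. destruct (Ext (pp_snd u)) as [del Hdel].
  destruct (L (pp_fst u) (del ∘ map2 B f (idm b))) as [gam [Hg1 Hg2]].
  { rewrite pp_compat, <- Hdel. assoc_r. rewrite map2_interchange. reflexivity. }
  destruct (pp_intro Hg2) as [w [Hw1 Hw2]].
  exists w. apply pp_ext.
  - rewrite pp_fst_comp, Hw1. exact Hg1.
  - rewrite pp_snd_comp, Hw2. exact Hdel.
Qed.

End PullbackPower.

Section PullbackPowerExists.
Context {X Y Z : Category} (B : Functor2 X Y Z)
  (radj : forall (x : X) (z : Z), exists (G : Y) (eps : hom (app2 B x G) z), couniversal eps)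
  (pbY : has_pullbacks Y) (poZ : has_pushouts Z).

Lemma pullback_power_exists {x1 y1 : X} (f : hom x1 y1) {z z' : Z} (p : hom z z') :
  exists (V W : Y) (pi : hom V W),
    (forall (y y' : Y) (g : hom y y'), llp g pi <-> corner_llp B f g p) /\
    (forall (a b : Y) (j : hom a b), extends_along (map2 B (idm y1) j) z -> extends_along j V) /\
    (forall (a b : Y) (j : hom a b), extends_along (map2 B (idm y1) j) z' ->
       llp (map2 B (idm x1) j) p -> extends_along j W).
Proof.
  destruct (radj x1 z) as [Hxz [exz Uxz]].
  destruct (radj x1 z') as [Hxz' [exz' Uxz']].
  destruct (radj y1 z') as [Hyz' [eyz' Uyz']].
  destruct (radj y1 z) as [Hyz [eyz Uyz]].
  destruct (couniversal_factor Uxz' (p ∘ exz)) as [m1 Hm1].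
  destruct (couniversal_factor Uxz' (eyz' ∘ map2 B f (idm Hyz'))) as [m2 Hm2].
  destruct (pbY m1 m2) as [W [w1 [w2 HW]]].
  destruct (pp_intro Uxz Uxz' Uyz' Hm1 Hm2 HW
              (gam := eyz ∘ map2 B f (idm Hyz)) (del := p ∘ eyz))
    as [pi [Hpi1 Hpi2]].
  { rewrite comp_assoc. reflexivity. }
  exists Hyz, W, pi. split; [|split].
  - intros y y' g. split.
    + exact (corner_llp_of_llp_pp Uxz Uxz' Uyz' Hm1 Hm2 HW Uyz Hpi1 Hpi2 (g := g)).
    + exact (llp_pp_of_corner_llp Uxz Uyz' Hm1 Hm2 HW Uyz Hpi1 Hpi2 poZ (g := g)).
  - intros a b j. apply (couniversal_extends Uyz).
  - intros a b j. exact (pp_extends Uxz Uxz' Uyz' Hm1 Hm2 HW (j := j)).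
Qed.

Lemma corner_llp_saturate (S : MapSet Y) {x1 y1 : X} (f : hom x1 y1) {z z' : Z} (p : hom z z') :
  (forall k, corner_llp B f (ms_map S k) p) ->
  forall (y y' : Y) (g : hom y y'), is_cof S g -> corner_llp B f g p.
Proof.
  intros Hk y y' g Hg. destruct (pullback_power_exists f p) as [V [W [pi [E _]]]].
  apply E, Hg. intros k. apply E, Hk.
Qed.

End PullbackPowerExists.

(** * Weak model structures from two weak factorization systems *)

Definition rel_strong_cylinder {C : Category} (I J : MapSet C) {a b : C} (i : hom a b) : Prop :=
  exists (P : C) (p q : hom b P), is_pushout i i p q /\
  exists (K : C) (j : hom P K) (r : hom K b),
    r ∘ j ∘ p = idm b /\ r ∘ j ∘ q = idm b /\
    is_cof I j /\ llp_fib_between_fibrant J (j ∘ p).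

Definition rel_strong_path {C : Category} (I J : MapSet C) {y x : C} (p : hom y x) : Prop :=
  exists (Q : C) (q1 q2 : hom Q y), is_pullback p p q1 q2 /\
  exists (Pth : C) (s : hom y Pth) (t : hom Pth Q),
    q1 ∘ (t ∘ s) = idm y /\ q2 ∘ (t ∘ s) = idm y /\ is_fib J t /\
    (forall (a b : C) (g : hom a b), cof_between_cofibrant I g -> llp g (q1 ∘ t)).

Section WeakModelFromWFS.
Context {C : Category} (I J : MapSet C) (J_sub : forall l, is_cof I (ms_map J l))
  (I_wfs : is_wfs I) (J_wfs : is_wfs J) (poC : has_pushouts C) (pbC : has_pullbacks C)
  {zero one : C} (Hzero : is_initial zero) (Hone : is_terminal one).

Local Notation Cof := (cof_class I).
Local Notation Fib := (fib_class J).

Lemma wcofibrant_iff (x : C) : wcofibrant zero Cof x <-> is_cofibrant_obj I x.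
Proof.
  split.
  - intros H. destruct (Hzero x) as [f _]. apply (H f).
  - intros Hx f. split; [apply Hx; exact Hzero|split; [apply cofibrant_obj_initial|]; assumption].
Qed.

Lemma wfibrant_iff (x : C) : wfibrant one Fib x <-> is_fibrant_obj J x.
Proof.
  split.
  - intros H. destruct (Hone x) as [f _]. apply (H f).
  - intros Hx f. split; [apply Hx; exact Hone|split; [|apply fibrant_obj_terminal]; assumption].
Qed.

Lemma cofibration_class : is_cofibration_class zero Cof.
Proof.
  assert (H0 : is_cofibrant_obj I zero) by (apply cofibrant_obj_initial; exact Hzero).
  split; [exact Hzero|split; [|split; [|split]]].
  - split; [apply cof_iso, idm_iso|split; exact H0].
  - intros x y f Hf Hx%wcofibrant_iff. assert (Hf' : is_cof I f) by (apply cof_iso; exact Hf).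
    split; [exact Hf'|split; [exact Hx|exact (cofibrant_obj_cod Hf' Hx)]].
  - intros x y z f g [Hf [Hx _]] [Hg [_ Hz]]. split; [apply cof_comp; assumption|split; assumption].
  - intros a b c i g [Hi _] _ Hc%wcofibrant_iff.
    destruct (poC i g) as [P [p [q HP]]]. exists P, p, q. split; [exact HP|].
    assert (Hq : is_cof I q) by exact (cof_pushout HP Hi).
    split; [exact Hq|split; [exact Hc|exact (cofibrant_obj_cod Hq Hc)]].
Qed.

Lemma fibration_class : is_fibration_class one Fib.
Proof.
  assert (H1 : is_fibrant_obj J one) by (apply fibrant_obj_terminal; exact Hone).
  split; [exact Hone|split; [|split; [|split]]].
  - split; [apply fib_iso, idm_iso|split; exact H1].
  - intros x y f Hf Hy%wfibrant_iff. assert (Hf' : is_fib J f) by (apply fib_iso; exact Hf).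
    split; [exact Hf'|split; [exact (fibrant_obj_dom Hf' Hy)|exact Hy]].
  - intros x y z f g [Hf [Hx _]] [Hg [_ Hz]]. split; [apply fib_comp; assumption|split; assumption].
  - intros a b c p g [Hp _] _ Hc%wfibrant_iff.
    destruct (pbC p g) as [Q [q1 [q2 HQ]]]. exists Q, q1, q2. split; [exact HQ|].
    assert (Hq : is_fib J q2) by exact (fib_pullback HQ Hp).
    split; [exact Hq|split; [exact (fibrant_obj_dom Hq Hc)|exact Hc]].
Qed.

Lemma factor_cof_acyclic_fib {x y : C} (f : hom x y) :
  wcofibrant zero Cof x -> wfibrant one Fib y ->
  exists (z : C) (g : hom x z) (h : hom z y),
    Cof _ _ g /\ acyclic_fib zero Cof Fib h /\ h ∘ g = f.
Proof.
  intros Hx%wcofibrant_iff Hy%wfibrant_iff.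
  destruct (I_wfs f) as [z [g [h [Hg [Hh E]]]]].
  assert (HhJ : is_fib J h) by exact (fib_incl J_sub Hh).
  exists z, g, h. split; [|split; [split|exact E]].
  - split; [exact Hg|split; [exact Hx|exact (cofibrant_obj_cod Hg Hx)]].
  - split; [exact HhJ|split; [exact (fibrant_obj_dom HhJ Hy)|exact Hy]].
  - intros a b i [Hi _] _ _. exact (Hi _ _ h Hh).
Qed.

Lemma factor_acyclic_cof_fib {x y : C} (f : hom x y) :
  wcofibrant zero Cof x -> wfibrant one Fib y ->
  exists (z : C) (g : hom x z) (h : hom z y),
    acyclic_cof one Cof Fib g /\ Fib _ _ h /\ h ∘ g = f.
Proof.
  intros Hx%wcofibrant_iff Hy%wfibrant_iff.
  destruct (J_wfs f) as [z [g [h [Hg [Hh E]]]]].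
  assert (HgI : is_cof I g) by exact (cof_incl J_sub Hg).
  exists z, g, h. split; [split|split; [|exact E]].
  - split; [exact HgI|split; [exact Hx|exact (cofibrant_obj_cod HgI Hx)]].
  - intros a b p [Hp _] _ _. exact (Hg _ _ p Hp).
  - split; [exact Hh|split; [exact (fibrant_obj_dom Hh Hy)|exact Hy]].
Qed.

Lemma has_rel_strong_cylinder_of {a b : C} (i : hom a b) :
  rel_strong_cylinder I J i -> Cof _ _ i -> has_rel_strong_cylinder one Cof Fib i.
Proof.
  intros [P [p [q [HP [K [j [r [E1 [E2 [Hj Hjp]]]]]]]]]] [Hi [Ha Hb]].
  exists P, p, q. split; [exact HP|]. exists K, j, r.
  assert (Hp : is_cof I p) by exact (cof_pushout (pushout_sym HP) Hi).
  assert (HP' : is_cofibrant_obj I P) by exact (cofibrant_obj_cod Hp Hb).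
  assert (HK : is_cofibrant_obj I K) by exact (cofibrant_obj_cod Hj HP').
  split; [exact E1|split; [exact E2|split]].
  - split; [exact Hj|split; assumption].
  - split; [split; [apply cof_comp; assumption|split; assumption]|].
    intros X Y pi [Hpi _] HX%wfibrant_iff HY%wfibrant_iff. exact (Hjp X Y pi Hpi HX HY).
Qed.

Lemma has_rel_strong_path_of {y x : C} (p : hom y x) :
  rel_strong_path I J p -> Fib _ _ p -> has_rel_strong_path zero Cof Fib p.
Proof.
  intros [Q [q1 [q2 [HQ [Pth [s [t [E1 [E2 [Ht Hq1t]]]]]]]]]] [Hp [Hy Hx]].
  exists Q, q1, q2. split; [exact HQ|]. exists Pth, s, t.
  assert (Hq1 : is_fib J q1) by exact (fib_pullback (pullback_sym HQ) Hp).
  assert (HQ' : is_fibrant_obj J Q) by exact (fibrant_obj_dom Hq1 Hy).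
  assert (HPth : is_fibrant_obj J Pth) by exact (fibrant_obj_dom Ht HQ').
  split; [exact E1|split; [exact E2|split]].
  - split; [exact Ht|split; assumption].
  - split; [split; [apply fib_comp; assumption|split; assumption]|].
    intros a b g Hg Ha%wcofibrant_iff Hb%wcofibrant_iff.
    apply Hq1t. split; [exact (proj1 Hg)|split; assumption].
Qed.

Lemma cof_class_between_cofibrant {x y : C} (f : hom x y) :
  (Cof x y f /\ wcofibrant zero Cof x /\ wcofibrant zero Cof y) <-> cof_between_cofibrant I f.
Proof. rewrite !wcofibrant_iff. unfold cof_class, cof_between_cofibrant. tauto. Qed.

Lemma fib_class_between_fibrant {x y : C} (f : hom x y) :
  (Fib x y f /\ wfibrant one Fib x /\ wfibrant one Fib y) <-> fib_between_fibrant J f.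
Proof. rewrite !wfibrant_iff. unfold fib_class, fib_between_fibrant. tauto. Qed.

Lemma weak_model_structure_of_wfs :
  (forall (a b : C) (i : hom a b), cof_between_cofibrant I i -> is_fibrant_obj J b ->
     rel_strong_cylinder I J i) ->
  (forall (y x : C) (p : hom y x), fib_between_fibrant J p -> is_cofibrant_obj I y ->
     rel_strong_path I J p) ->
  is_weak_model_structure zero one Cof Fib.
Proof.
  intros Hcyl Hpath.
  split; [exact cofibration_class|split; [exact fibration_class|split; [|split; [|split]]]].
  - intros x y f Hx Hy. exact (factor_cof_acyclic_fib f Hx Hy).
  - intros x y f Hx Hy. exact (factor_acyclic_cof_fib f Hx Hy).
  - intros a b i Hi _ Hb%wfibrant_iff. exact (has_rel_strong_cylinder_of (Hcyl a b i Hi Hb) Hi).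
  - intros y x p Hp Hy%wcofibrant_iff _. exact (has_rel_strong_path_of (Hpath y x p Hp Hy) Hp).
Qed.

End WeakModelFromWFS.

(** * Cylinders and path objects from an interval *)

Section Tensor.
Context {A C : Category} (T : Bifunctor A C) (T_div : divisible_both_sides T)
  (pbA : has_pullbacks A) (pbC : has_pullbacks C) (poC : has_pushouts C)
  {zero one : C} (Hzero : is_initial zero) (Hone : is_terminal one)
  (I J : MapSet C) (IA JA : MapSet A)
  (corner_IA_I : corner_set_in T IA I (fun P Q (k : hom P Q) => is_cof I k))
  (corner_IA_J : corner_set_in T IA J
                   (fun P Q (k : hom P Q) => llp_fib_between_fibrant J k))
  (corner_JA_I : corner_set_in T JA I
                   (fun P Q (k : hom P Q) => llp_fib_between_fibrant J k)).

Local Notation B := (functor2_of_bifunctor T).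

Lemma tensor_radj_r (a : A) (z : C) :
  exists (G : C) (eps : hom (app2 B a G) z), couniversal (B := B) eps.
Proof. exact (proj1 T_div a z). Qed.

Lemma tensor_radj_l (c : C) (z : C) :
  exists (G : A) (eps : hom (app2 B G c) z), couniversal (B := swap2 B) eps.
Proof. exact (proj2 T_div c z). Qed.

Lemma tensor_initial (a : A) : is_initial (app2 B a zero).
Proof. exact (left_adjoint_initial (B := B) (tensor_radj_r a) Hzero). Qed.

Lemma corner_llp_of_corner_in {x1 y1 : A} {x2 y2 : C} (f : hom x1 y1) (g : hom x2 y2)
  (K : forall P Q : C, hom P Q -> Prop) {z z' : C} (p : hom z z') :
  corner_in T f g K -> (forall P Q (k : hom P Q), K P Q k -> llp k p) -> corner_llp B f g p.
Proof. intros Hc HK P p1 p2 HP k H1 H2. exact (HK _ _ k (Hc P p1 p2 HP k H1 H2)). Qed.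

Lemma corner_llp_saturate_l (S : MapSet A) {x2 y2 : C} (g : hom x2 y2) {z z' : C} (p : hom z z') :
  (forall k, corner_llp B (ms_map S k) g p) ->
  forall (x y : A) (f : hom x y), is_cof S f -> corner_llp B f g p.
Proof.
  intros Hk x y f Hf. apply corner_llp_swap.
  refine (corner_llp_saturate (B := swap2 B) tensor_radj_l pbA poC (S := S) _ Hf).
  intros k. apply corner_llp_swap, Hk.
Qed.

Lemma corner_llp_saturate_r (S : MapSet C) {x1 y1 : A} (f : hom x1 y1) {z z' : C} (p : hom z z') :
  (forall k, corner_llp B f (ms_map S k) p) ->
  forall (x y : C) (g : hom x y), is_cof S g -> corner_llp B f g p.
Proof. exact (corner_llp_saturate (B := B) tensor_radj_r pbC poC (S := S) (f := f) (p := p)). Qed.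

Lemma corner_cof_cof {x1 y1 : A} {x2 y2 : C} (f : hom x1 y1) (g : hom x2 y2)
  {z z' : C} (p : hom z z') :
  is_cof IA f -> is_cof I g -> is_fib I p -> corner_llp B f g p.
Proof.
  intros Hf Hg Hp. apply (corner_llp_saturate_l (S := IA)); [|exact Hf]. intros k.
  apply (corner_llp_saturate_r (S := I)); [|exact Hg]. intros l.
  apply (corner_llp_of_corner_in (@corner_IA_I k l)). intros P Q m Hm. exact (Hm _ _ p Hp).
Qed.

Lemma corner_cof_J {x1 y1 : A} (f : hom x1 y1) (l : ms_idx J) {z z' : C} (p : hom z z') :
  is_cof IA f -> fib_between_fibrant J p -> corner_llp B f (ms_map J l) p.
Proof.
  intros Hf [Hp [Hz Hz']]. apply (corner_llp_saturate_l (S := IA)); [|exact Hf]. intros k.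
  apply (corner_llp_of_corner_in (@corner_IA_J k l)). intros P Q m Hm. exact (Hm _ _ p Hp Hz Hz').
Qed.

Lemma corner_JA_cof (k : ms_idx JA) {x2 y2 : C} (g : hom x2 y2) {z z' : C} (p : hom z z') :
  is_cof I g -> fib_between_fibrant J p -> corner_llp B (ms_map JA k) g p.
Proof.
  intros Hg [Hp [Hz Hz']]. apply (corner_llp_saturate_r (S := I)); [|exact Hg]. intros l.
  apply (corner_llp_of_corner_in (@corner_JA_I k l)). intros P Q m Hm. exact (Hm _ _ p Hp Hz Hz').
Qed.

Lemma tensor_llp_of_corner {x1 y1 : A} (f : hom x1 y1) {y : C} (g0 : hom zero y)
  {z z' : C} (p : hom z z') : corner_llp B f g0 p -> llp (map2 B f (idm y)) p.
Proof. apply (corner_llp_initial (B := B)); apply tensor_initial. Qed.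

Lemma tensor_JA_extends (k : ms_idx JA) {y z : C} :
  is_cofibrant_obj I y -> is_fibrant_obj J z -> extends_along (map2 B (ms_map JA k) (idm y)) z.
Proof.
  intros Hy Hz. destruct (Hone z) as [h _]. destruct (Hzero y) as [g0 _].
  apply (llp_terminal_iff _ h Hone), (tensor_llp_of_corner (g0 := g0)), corner_JA_cof.
  - exact (Hy zero Hzero g0).
  - exact (fib_between_fibrant_terminal h Hone Hz).
Qed.

Lemma tensor_JA_llp (k : ms_idx JA) {y z z' : C} (p : hom z z') :
  is_cofibrant_obj I y -> fib_between_fibrant J p -> llp (map2 B (ms_map JA k) (idm y)) p.
Proof.
  intros Hy Hp. destruct (Hzero y) as [g0 _].
  apply (tensor_llp_of_corner (g0 := g0)), corner_JA_cof; [exact (Hy zero Hzero g0)|exact Hp].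
Qed.

(* Via the pullback power [<g, p>] in [A], which is a [JA]-fibration between
   [JA]-fibrant objects. *)
Lemma corner_acyclic_cof {x1 y1 : A} {x2 y2 : C} (f : hom x1 y1) (g : hom x2 y2)
  {z z' : C} (p : hom z z') :
  llp_fib_between_fibrant JA f -> cof_between_cofibrant I g -> fib_between_fibrant J p ->
  corner_llp B f g p.
Proof.
  intros Hf [Hg [Hx2 Hy2]] Hp.
  destruct (pullback_power_exists (B := swap2 B) tensor_radj_l pbA poC g p)
    as [V [W [pi [Epi [EV EW]]]]].
  apply corner_llp_swap, Epi, Hf.
  - intros k. apply Epi, corner_llp_swap, corner_JA_cof; [exact Hg|exact Hp].
  - apply fibrant_obj_of_extends. intros k.
    apply EV, tensor_JA_extends; [exact Hy2|exact (proj1 (proj2 Hp))].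
  - apply fibrant_obj_of_extends. intros k. apply EW.
    + apply tensor_JA_extends; [exact Hy2|exact (proj2 (proj2 Hp))].
    + apply tensor_JA_llp; [exact Hx2|exact Hp].
Qed.

Lemma tensor_cof_llp {x1 y1 : A} (f : hom x1 y1) {y z z' : C} (p : hom z z') :
  is_cof IA f -> is_cofibrant_obj I y -> is_fib I p -> llp (map2 B f (idm y)) p.
Proof.
  intros Hf Hy Hp. destruct (Hzero y) as [g0 _].
  apply (tensor_llp_of_corner (g0 := g0)), corner_cof_cof;
    [exact Hf|exact (Hy zero Hzero g0)|exact Hp].
Qed.

Lemma tensor_acyclic_llp {x1 y1 : A} (f : hom x1 y1) {y z z' : C} (p : hom z z') :
  llp_fib_between_fibrant JA f -> is_cofibrant_obj I y -> fib_between_fibrant J p ->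
  llp (map2 B f (idm y)) p.
Proof.
  intros Hf Hy Hp. destruct (Hzero y) as [g0 _].
  apply (tensor_llp_of_corner (g0 := g0)), corner_acyclic_cof; [exact Hf| |exact Hp].
  split; [exact (Hy zero Hzero g0)|split; [apply cofibrant_obj_initial, Hzero|exact Hy]].
Qed.

Section Interval.
Context {II : A} (alpha : forall c : C, hom (app2 B II c) c)
  (beta : forall c : C, hom c (app2 B II c))
  (alpha_nat : forall (c c' : C) (g : hom c c'), alpha c' ∘ map2 B (idm II) g = g ∘ alpha c)
  (alpha_beta : forall c : C, alpha c ∘ beta c = idm c /\ beta c ∘ alpha c = idm (app2 B II c))
  {S : A} {i1 i2 : hom II S} (Hcop : is_coproduct i1 i2)
  {Cy D : A} {incl : hom S Cy} {codiag : hom S II} {d : hom II D} {r : hom Cy D}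
  (codiag_i1 : codiag ∘ i1 = idm II) (codiag_i2 : codiag ∘ i2 = idm II)
  (interval_square : d ∘ codiag = r ∘ incl)
  (incl_cof : is_cof IA incl) (d_cof : is_cof IA d) (d_acyclic : llp_fib_between_fibrant JA d)
  (end1_acyclic : llp_fib_between_fibrant JA (incl ∘ i1)).

Lemma alpha_beta_id (c : C) : alpha c ∘ beta c = idm c.
Proof. apply alpha_beta. Qed.

Lemma beta_alpha_id (c : C) : beta c ∘ alpha c = idm (app2 B II c).
Proof. apply alpha_beta. Qed.

Lemma beta_nat {c c' : C} (g : hom c c') : beta c' ∘ g = map2 B (idm II) g ∘ beta c.
Proof.
  rewrite <- (comp_id_l (map2 B (idm II) g ∘ beta c)), <- (beta_alpha_id c').
  rewrite <- comp_assoc, (comp_assoc (beta c) (map2 B (idm II) g) (alpha c')), alpha_nat.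
  rewrite <- comp_assoc, alpha_beta_id, comp_id_r. reflexivity.
Qed.

Lemma r_end1 : r ∘ (incl ∘ i1) = d.
Proof.
  rewrite comp_assoc, <- interval_square, <- comp_assoc, codiag_i1, comp_id_r. reflexivity.
Qed.

Lemma r_end2 : r ∘ (incl ∘ i2) = d.
Proof.
  rewrite comp_assoc, <- interval_square, <- comp_assoc, codiag_i2, comp_id_r. reflexivity.
Qed.

Lemma tensor_coproduct (b : C) : is_coproduct (map2 B i1 (idm b)) (map2 B i2 (idm b)).
Proof. exact (left_adjoint_coproduct (B := swap2 B) (tensor_radj_l b) Hcop). Qed.

Lemma unit_retraction {y : C} :
  is_cofibrant_obj I y -> is_fibrant_obj J y ->
  exists rho : hom (app2 B D y) y, rho ∘ map2 B d (idm y) = alpha y.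
Proof.
  intros Hy Hy'. destruct (Hone y) as [h _].
  destruct (llp_terminal_iff (map2 B d (idm y)) h Hone) as [Ext _].
  apply Ext. apply tensor_acyclic_llp; [exact d_acyclic|exact Hy|].
  exact (fib_between_fibrant_terminal h Hone Hy').
Qed.


(* [K = Cyl ⊙ b ⊔_{Cyl ⊙ a} D ⊙ a] is the cylinder of [i], and [j : b ⊔_a b -> K] is
   induced on the two copies of [b] by the endpoints [incl ∘ i1] and [incl ∘ i2]. *)
Section Cylinder.
Context {a b : C} {i : hom a b} {P : C} {p q : hom b P} (HP : is_pushout i i p q)
  {K : C} {kb : hom (app2 B Cy b) K} {ka : hom (app2 B D a) K}
  (HK : is_pushout (map2 B (idm Cy) i) (map2 B r (idm a)) kb ka).

Lemma cyl_end_restrict (e : hom II Cy) : r ∘ e = d ->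
  kb ∘ (map2 B e (idm b) ∘ (beta b ∘ i)) = ka ∘ (map2 B d (idm a) ∘ beta a).
Proof.
  intros He. rewrite beta_nat. rewrite_chain (map2_interchange B e i).
  rewrite_chain (proj1 HK). rewrite_chain (map2_comp_l B a e r). rewrite He. reflexivity.
Qed.

Context {j : hom P K}
  (Hj1 : j ∘ p = kb ∘ (map2 B (incl ∘ i1) (idm b) ∘ beta b))
  (Hj2 : j ∘ q = kb ∘ (map2 B (incl ∘ i2) (idm b) ∘ beta b)).

Lemma cyl_retraction : is_cofibrant_obj I b -> is_fibrant_obj J b ->
  exists ret : hom K b, ret ∘ j ∘ p = idm b /\ ret ∘ j ∘ q = idm b.
Proof.
  intros Hb Hb'. destruct (unit_retraction Hb Hb') as [rho Hrho].
  destruct (pushout_factor HK (u := rho ∘ map2 B r (idm b)) (v := rho ∘ map2 B (idm D) i))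
    as [ret [Hret1 _]].
  { assoc_r. rewrite map2_interchange. reflexivity. }
  assert (Hend : forall e, r ∘ e = d -> ret ∘ (kb ∘ (map2 B e (idm b) ∘ beta b)) = idm b).
  { intros e He. rewrite_chain Hret1. rewrite_chain (map2_comp_l B b e r). rewrite He.
    rewrite_chain Hrho. apply alpha_beta_id. }
  exists ret. split; rewrite <- comp_assoc; [rewrite Hj1 | rewrite Hj2];
    apply Hend; [apply r_end1 | apply r_end2].
Qed.

Lemma cyl_lift_D {X Y : C} (pi : hom X Y) : llp (map2 B d (idm a)) pi ->
  forall (w : hom b X) (v : hom K Y), pi ∘ w = v ∘ (j ∘ p) ->
  exists hD, hD ∘ map2 B d (idm a) = w ∘ (i ∘ alpha a) /\ pi ∘ hD = v ∘ ka.
Proof.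
  intros L w v Sq. apply L.
  rewrite <- (comp_id_r (map2 B d (idm a))), <- (beta_alpha_id a). assoc_r.
  rewrite_chain <- (cyl_end_restrict r_end1). rewrite_chain <- Hj1.
  rewrite_chain <- Sq. reflexivity.
Qed.

(* Lift first on [D ⊙ a], then against the corner map [incl ^⊙ i] on [Cyl ⊙ b]
   (against [(incl ∘ i1) ^⊙ i] for [cyl_incl1_acyclic]), and glue along [K]. *)
Lemma cyl_incl_cof : is_cof I i -> is_cofibrant_obj I a -> is_cof I j.
Proof.
  intros Hi Ha X Y pi Hpi u v Sq.
  destruct (cyl_lift_D (tensor_cof_llp d_cof Ha Hpi) (w := u ∘ p) (v := v)) as [hD [HD1 HD2]].
  { rewrite comp_assoc, Sq, <- comp_assoc. reflexivity. }
  destruct (poC (map2 B (idm S) i) (map2 B incl (idm a))) as [Pc [m1 [m2 HPc]]].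
  destruct (pushout_factor HPc (map2_interchange B incl i)) as [kc [Hk1 Hk2]].
  destruct (tensor_coproduct (u ∘ (p ∘ alpha b)) (u ∘ (q ∘ alpha b))) as [t1 [[Ht1 Ht2] _]].
  destruct (pushout_factor HPc (u := t1) (v := hD ∘ map2 B r (idm a))) as [top [Htop1 Htop2]].
  { apply (coproduct_ext (@tensor_coproduct a)); assoc_r; rewrite <- map2_interchange.
    - rewrite_chain Ht1. rewrite alpha_nat. rewrite_chain (map2_comp_l B a i1 incl).
      rewrite_chain (map2_comp_l B a (incl ∘ i1) r). rewrite r_end1, HD1. assoc_r. reflexivity.
    - rewrite_chain Ht2. rewrite alpha_nat. rewrite_chain (map2_comp_l B a i2 incl).
      rewrite_chain (map2_comp_l B a (incl ∘ i2) r). rewrite r_end2, HD1.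
      rewrite_chain <- (proj1 HP). reflexivity. }
  assert (Sq2 : pi ∘ top = (v ∘ kb) ∘ kc).
  { apply (pushout_ext HPc); assoc_r.
    - rewrite Htop1, Hk1. apply (coproduct_ext (@tensor_coproduct b)); assoc_r;
        [rewrite Ht1 | rewrite Ht2]; rewrite map2_comp_l; rewrite_chain Sq;
        [rewrite_chain Hj1 | rewrite_chain Hj2]; rewrite beta_alpha_id, comp_id_r; reflexivity.
    - rewrite Htop2, Hk2. rewrite_chain HD2. rewrite (proj1 HK). reflexivity. }
  destruct (corner_cof_cof incl_cof Hi Hpi HPc Hk1 Hk2 Sq2) as [hC [HC1 HC2]].
  destruct (pushout_factor_over HK (pi := pi) (v := v) (u1 := hC) (u2 := hD)) as [h [Hh1 [_ Hh3]]];
    [rewrite <- Hk2, comp_assoc, HC1; exact Htop2 | exact HC2 | exact HD2 |].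
  exists h. split; [|exact Hh3].
  apply (pushout_ext HP); assoc_r; [rewrite Hj1 | rewrite Hj2]; rewrite_chain Hh1;
    rewrite <- map2_comp_l; rewrite_chain <- Hk1; rewrite_chain HC1; rewrite_chain Htop1;
    [rewrite_chain Ht1 | rewrite_chain Ht2]; rewrite alpha_beta_id, comp_id_r; reflexivity.
Qed.

Lemma cyl_incl1_acyclic :
  cof_between_cofibrant I i -> llp_fib_between_fibrant J (j ∘ p).
Proof.
  intros Hi X Y pi Hpi HX HY u v Sq.
  assert (Hpi' : fib_between_fibrant J pi) by (split; [|split]; assumption).
  destruct (cyl_lift_D (tensor_acyclic_llp d_acyclic (proj1 (proj2 Hi)) Hpi') Sq)
    as [hD [HD1 HD2]].
  destruct (poC (map2 B (idm II) i) (map2 B (incl ∘ i1) (idm a))) as [Pe [m1 [m2 HPe]]].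
  destruct (pushout_factor HPe (map2_interchange B (incl ∘ i1) i)) as [ke [Hk1 Hk2]].
  destruct (pushout_factor HPe (u := u ∘ alpha b) (v := hD ∘ map2 B r (idm a)))
    as [top [Htop1 Htop2]].
  { assoc_r. rewrite alpha_nat. rewrite_chain (map2_comp_l B a (incl ∘ i1) r).
    rewrite r_end1, HD1. reflexivity. }
  assert (Sq2 : pi ∘ top = (v ∘ kb) ∘ ke).
  { apply (pushout_ext HPe); assoc_r.
    - rewrite Htop1, Hk1. rewrite_chain Sq. rewrite_chain Hj1.
      rewrite beta_alpha_id, comp_id_r. reflexivity.
    - rewrite Htop2, Hk2. rewrite_chain HD2. rewrite (proj1 HK). reflexivity. }
  destruct (corner_acyclic_cof end1_acyclic Hi Hpi' HPe Hk1 Hk2 Sq2)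
    as [hC [HC1 HC2]].
  destruct (pushout_factor_over HK (pi := pi) (v := v) (u1 := hC) (u2 := hD)) as [h [Hh1 [_ Hh3]]];
    [rewrite <- Hk2, comp_assoc, HC1; exact Htop2 | exact HC2 | exact HD2 |].
  exists h. split; [|exact Hh3].
  assoc_r. rewrite Hj1. rewrite_chain Hh1. rewrite_chain <- Hk1. rewrite_chain HC1.
  rewrite_chain Htop1. rewrite alpha_beta_id, comp_id_r. reflexivity.
Qed.

End Cylinder.

Lemma relative_cylinder_exists {a b : C} (i : hom a b) :
  cof_between_cofibrant I i -> is_fibrant_obj J b -> rel_strong_cylinder I J i.
Proof.
  intros Hi Hb'. pose proof Hi as [Hicof [Ha Hb]].
  destruct (poC i i) as [P [p [q HP]]].
  destruct (poC (map2 B (idm Cy) i) (map2 B r (idm a))) as [K [kb [ka HK]]].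
  destruct (pushout_factor HP (u := kb ∘ (map2 B (incl ∘ i1) (idm b) ∘ beta b))
                              (v := kb ∘ (map2 B (incl ∘ i2) (idm b) ∘ beta b)))
    as [j [Hj1 Hj2]].
  { assoc_r. rewrite (cyl_end_restrict HK r_end1), (cyl_end_restrict HK r_end2). reflexivity. }
  destruct (cyl_retraction HK Hj1 Hj2 Hb Hb') as [ret [E1 E2]].
  exists P, p, q. split; [exact HP|]. exists K, j, ret.
  split; [exact E1|split; [exact E2|split]].
  - exact (cyl_incl_cof HP HK Hj1 Hj2 Hicof Ha).
  - exact (cyl_incl1_acyclic HK Hj1 Hi).
Qed.

(* [Pth = [Cyl, y] ×_[Cyl, x] [D, x]] is the target of the pullback power [<r, p>],
   and [path_end e] evaluates paths at the endpoint [e : II -> Cyl]. *)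
Section Path.
Context {y x : C} {p : hom y x}
  {Gy : C} {ey : hom (app2 B Cy Gy) y} (Uy : couniversal ey)
  {Gx : C} {ex : hom (app2 B Cy Gx) x} (Ux : couniversal ex)
  {Hx : C} {eD : hom (app2 B D Hx) x} (UD : couniversal eD)
  {mp : hom Gy Gx} (Hmp : ex ∘ map2 B (idm Cy) mp = p ∘ ey)
  {mr : hom Hx Gx} (Hmr : ex ∘ map2 B (idm Cy) mr = eD ∘ map2 B r (idm Hx))
  {Pth : C} {pi1 : hom Pth Gy} {pi2 : hom Pth Hx} (HPth : is_pullback mp mr pi1 pi2)
  {Q : C} {q1 q2 : hom Q y} (HQ : is_pullback p p q1 q2).

Local Notation pfst := (@pp_fst _ _ _ B Cy y Gy ey Pth pi1 _).
Local Notation psnd := (@pp_snd _ _ _ B D x Hx eD Pth pi2 _).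
Local Notation pfst_comp := (@pp_fst_comp _ _ _ B Cy y Gy ey Pth pi1 _ _).
Local Notation psnd_comp := (@pp_snd_comp _ _ _ B D x Hx eD Pth pi2 _ _).

Definition path_end (e : hom II Cy) : hom Pth y :=
  pfst (idm Pth) ∘ (map2 B e (idm Pth) ∘ beta Pth).

Lemma path_end_comp (e : hom II Cy) {w : C} (u : hom w Pth) :
  path_end e ∘ u = pfst u ∘ (map2 B e (idm w) ∘ beta w).
Proof.
  unfold path_end. assoc_r. rewrite beta_nat. rewrite_chain (map2_interchange B e u).
  rewrite_chain <- (pfst_comp (idm Pth) u). rewrite comp_id_l. reflexivity.
Qed.

Lemma path_end_square (e : hom II Cy) : r ∘ e = d ->
  p ∘ path_end e = psnd (idm Pth) ∘ (map2 B d (idm Pth) ∘ beta Pth).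
Proof.
  intros He. unfold path_end. rewrite_chain (pp_compat Hmp Hmr HPth (idm Pth)).
  rewrite_chain (map2_comp_l B Pth e r). rewrite He. reflexivity.
Qed.

Lemma path_glue {a' b' : C} (g : hom a' b') (u : hom a' Pth)
  (gam : hom (app2 B Cy b') y) (del : hom (app2 B D b') x) :
  gam ∘ map2 B (idm Cy) g = pfst u -> del ∘ map2 B (idm D) g = psnd u ->
  p ∘ gam = del ∘ map2 B r (idm b') ->
  exists w, w ∘ g = u /\ pfst w = gam.
Proof.
  intros E1 E2 E3. destruct (pp_intro Uy Ux UD Hmp Hmr HPth E3) as [w [Hw1 Hw2]].
  exists w. split; [|exact Hw1].
  apply (pp_ext Uy UD HPth); rewrite ?pfst_comp, ?psnd_comp;
    [rewrite Hw1 | rewrite Hw2]; assumption.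
Qed.

Lemma path_extend_D {a' b' : C} (g : hom a' b') (h : hom x one) :
  corner_llp B d g h -> forall (u : hom a' Pth) (v : hom b' y),
  v ∘ g = path_end (incl ∘ i1) ∘ u ->
  exists del, del ∘ map2 B d (idm b') = p ∘ (v ∘ alpha b') /\
              del ∘ map2 B (idm D) g = psnd u.
Proof.
  intros Hc u v Hv.
  destruct (poC (map2 B (idm II) g) (map2 B d (idm a'))) as [Pd [n1 [n2 HPd]]].
  destruct (pushout_factor HPd (map2_interchange B d g)) as [kd [Hkd1 Hkd2]].
  destruct (pushout_factor HPd (u := p ∘ (v ∘ alpha b')) (v := psnd u)) as [top [Htop1 Htop2]].
  { assoc_r. rewrite alpha_nat. rewrite_chain Hv. rewrite_chain (path_end_comp (incl ∘ i1) u).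
    rewrite_chain (pp_compat Hmp Hmr HPth u). rewrite_chain (map2_comp_l B a' (incl ∘ i1) r).
    rewrite r_end1, beta_alpha_id, comp_id_r. reflexivity. }
  destruct (proj1 (llp_terminal_iff kd h Hone) (Hc Pd n1 n2 HPd kd Hkd1 Hkd2) top) as [del Hdel].
  exists del. split; [rewrite <- Hkd1 | rewrite <- Hkd2]; rewrite comp_assoc, Hdel; assumption.
Qed.

Context {t : hom Pth Q}
  (Ht1 : q1 ∘ t = path_end (incl ∘ i1)) (Ht2 : q2 ∘ t = path_end (incl ∘ i2)).

Lemma path_section : is_cofibrant_obj I y -> is_fibrant_obj J y ->
  exists s : hom y Pth, q1 ∘ (t ∘ s) = idm y /\ q2 ∘ (t ∘ s) = idm y.
Proof.
  intros Hy Hy'. destruct (unit_retraction Hy Hy') as [rho Hrho].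
  destruct (pp_intro Uy Ux UD Hmp Hmr HPth (gam := rho ∘ map2 B r (idm y)) (del := p ∘ rho))
    as [s [Hs1 _]].
  { apply comp_assoc. }
  assert (Hend : forall e, r ∘ e = d -> path_end e ∘ s = idm y).
  { intros e He. rewrite path_end_comp, Hs1. assoc_r. rewrite_chain (map2_comp_l B y e r).
    rewrite He. rewrite_chain Hrho. apply alpha_beta_id. }
  exists s. rewrite !comp_assoc, Ht1, Ht2. split; apply Hend; [apply r_end1 | apply r_end2].
Qed.

(* First extend the [D]-component against [d ^⊙ g], then the [Cyl]-component
   against [incl ^⊙ g] (against [(incl ∘ i1) ^⊙ g] for [path_proj1_acyclic]). *)
Lemma path_proj_fib : fib_between_fibrant J p -> is_fib J t.
Proof.
  intros Hp l u v Sq.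
  destruct (Hone x) as [h _].
  destruct (path_extend_D (corner_cof_J (l := l) d_cof
              (fib_between_fibrant_terminal h Hone (proj2 (proj2 Hp)))) (u := u) (v := q1 ∘ v))
    as [del [HD1 HD2]].
  { rewrite <- comp_assoc, <- Sq, comp_assoc, Ht1. reflexivity. }
  destruct (poC (map2 B (idm S) (ms_map J l)) (map2 B incl (idm (ms_dom (m := J) l))))
    as [Pc [m1 [m2 HPc]]].
  destruct (pushout_factor HPc (map2_interchange B incl (ms_map J l))) as [kc [Hk1 Hk2]].
  destruct (tensor_coproduct (q1 ∘ (v ∘ alpha _)) (q2 ∘ (v ∘ alpha _)))
    as [tS [[HtS1 HtS2] _]].
  destruct (pushout_factor HPc (u := tS) (v := pfst u)) as [top [Htop1 Htop2]].
  { apply (coproduct_ext (@tensor_coproduct _)); assoc_r; rewrite <- map2_interchange.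
    - rewrite_chain HtS1. rewrite alpha_nat. rewrite_chain <- Sq. rewrite_chain Ht1.
      rewrite_chain (path_end_comp (incl ∘ i1) u).
      rewrite beta_alpha_id, comp_id_r, map2_comp_l. reflexivity.
    - rewrite_chain HtS2. rewrite alpha_nat. rewrite_chain <- Sq. rewrite_chain Ht2.
      rewrite_chain (path_end_comp (incl ∘ i2) u).
      rewrite beta_alpha_id, comp_id_r, map2_comp_l. reflexivity. }
  assert (Sq2 : p ∘ top = (del ∘ map2 B r (idm _)) ∘ kc).
  { apply (pushout_ext HPc); assoc_r.
    - rewrite Htop1, Hk1. apply (coproduct_ext (@tensor_coproduct _)); assoc_r;
        [rewrite HtS1 | rewrite HtS2; rewrite_chain <- (proj1 HQ)]; rewrite map2_comp_l;
        rewrite map2_comp_l; [rewrite r_end1 | rewrite r_end2]; rewrite HD1; assoc_r; reflexivity.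
    - rewrite Htop2, Hk2, map2_interchange. rewrite_chain HD2.
      exact (pp_compat Hmp Hmr HPth u). }
  destruct (corner_cof_J (l := l) incl_cof Hp HPc Hk1 Hk2 Sq2) as [gam [Hg1 Hg2]].
  destruct (path_glue (g := ms_map J l) (u := u) (gam := gam) (del := del)) as [w [Hw1 Hw2]];
    [rewrite <- Hk2, comp_assoc, Hg1; exact Htop2 | exact HD2 | exact Hg2 |].
  exists w. split; [exact Hw1|].
  apply (pullback_ext HQ); rewrite !comp_assoc; [rewrite Ht1 | rewrite Ht2];
    rewrite path_end_comp, Hw2, <- map2_comp_l; rewrite_chain <- Hk1; rewrite_chain Hg1;
    rewrite_chain Htop1; [rewrite_chain HtS1 | rewrite_chain HtS2];
    rewrite alpha_beta_id, comp_id_r; reflexivity.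
Qed.

Lemma path_proj1_acyclic : fib_between_fibrant J p ->
  forall (a' b' : C) (g : hom a' b'), cof_between_cofibrant I g -> llp g (q1 ∘ t).
Proof.
  intros Hp a' b' g Hg u v Sq.
  destruct (Hone x) as [h _].
  destruct (path_extend_D (corner_acyclic_cof d_acyclic Hg
              (fib_between_fibrant_terminal h Hone (proj2 (proj2 Hp)))) (u := u) (v := v))
    as [del [HD1 HD2]].
  { rewrite <- Sq, Ht1. reflexivity. }
  destruct (poC (map2 B (idm II) g) (map2 B (incl ∘ i1) (idm a'))) as [Pe [m1 [m2 HPe]]].
  destruct (pushout_factor HPe (map2_interchange B (incl ∘ i1) g)) as [ke [Hk1 Hk2]].
  destruct (pushout_factor HPe (u := v ∘ alpha b') (v := pfst u)) as [top [Htop1 Htop2]].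
  { assoc_r. rewrite alpha_nat. rewrite_chain <- Sq. rewrite_chain Ht1.
    rewrite_chain (path_end_comp (incl ∘ i1) u). rewrite beta_alpha_id, comp_id_r. reflexivity. }
  assert (Sq2 : p ∘ top = (del ∘ map2 B r (idm b')) ∘ ke).
  { apply (pushout_ext HPe); assoc_r.
    - rewrite Htop1, Hk1, map2_comp_l, r_end1, HD1. reflexivity.
    - rewrite Htop2, Hk2, map2_interchange. rewrite_chain HD2.
      exact (pp_compat Hmp Hmr HPth u). }
  destruct (corner_acyclic_cof end1_acyclic Hg Hp HPe Hk1 Hk2 Sq2) as [gam [Hg1 Hg2]].
  destruct (path_glue (g := g) (u := u) (gam := gam) (del := del)) as [w [Hw1 Hw2]];
    [rewrite <- Hk2, comp_assoc, Hg1; exact Htop2 | exact HD2 | exact Hg2 |].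
  exists w. split; [exact Hw1|].
  rewrite Ht1, path_end_comp, Hw2. rewrite_chain <- Hk1. rewrite_chain Hg1.
  rewrite_chain Htop1. rewrite alpha_beta_id, comp_id_r. reflexivity.
Qed.

End Path.

Lemma relative_path_exists {y x : C} (p : hom y x) :
  fib_between_fibrant J p -> is_cofibrant_obj I y -> rel_strong_path I J p.
Proof.
  intros Hp Hy.
  destruct (tensor_radj_r Cy y) as [Gy [ey Uy]].
  destruct (tensor_radj_r Cy x) as [Gx [ex Ux]].
  destruct (tensor_radj_r D x) as [Hx [eD UD]].
  destruct (couniversal_factor Ux (p ∘ ey)) as [mp Hmp].
  destruct (couniversal_factor Ux (eD ∘ map2 B r (idm Hx))) as [mr Hmr].
  destruct (pbC mp mr) as [Pth [pi1 [pi2 HPth]]].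
  destruct (pbC p p) as [Q [q1 [q2 HQ]]].
  destruct (pullback_factor HQ (u := path_end (ey := ey) (pi1 := pi1) (incl ∘ i1))
                               (v := path_end (ey := ey) (pi1 := pi1) (incl ∘ i2)))
    as [t [Ht1 Ht2]].
  { rewrite (path_end_square Hmp Hmr HPth r_end1), (path_end_square Hmp Hmr HPth r_end2).
    reflexivity. }
  destruct (path_section Uy Ux UD Hmp Hmr HPth Ht1 Ht2 Hy (proj1 (proj2 Hp))) as [s [E1 E2]].
  exists Q, q1, q2. split; [exact HQ|]. exists Pth, s, t.
  split; [exact E1|split; [exact E2|split]].
  - exact (path_proj_fib Uy Ux UD Hmp Hmr HPth HQ Ht1 Ht2 Hp).
  - exact (path_proj1_acyclic Uy Ux UD Hmp Hmr HPth Ht1 Hp).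
Qed.

End Interval.

End Tensor.


Theorem theorem3p2
  (A C : Category)
  (A_complete : complete A) (A_cocomplete : cocomplete A)
  (C_complete : complete C) (C_cocomplete : cocomplete C)
  (* (i) *)
  (T : Bifunctor A C) (T_div : divisible_both_sides T)
  (* (ii) *)
  (I J : MapSet C) (I_wfs : is_wfs I) (J_wfs : is_wfs J)
  (* (iii) *)
  (IA JA : MapSet A)
  (* (iv) *)
  (J_sub : forall l : ms_idx J, is_cof I (ms_map J l))
  (JA_sub : forall l : ms_idx JA, is_cof IA (ms_map JA l))
  (* (v) *)
  (corner_IA_I : corner_set_in T IA I (fun P Q (k : hom P Q) => is_cof I k))
  (* (vi) *)
  (corner_IA_J : corner_set_in T IA J
                   (fun P Q (k : hom P Q) => llp_fib_between_fibrant J k))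
  (corner_JA_I : corner_set_in T JA I
                   (fun P Q (k : hom P Q) => llp_fib_between_fibrant J k))
  (* (vii) and (viii) *)
  (unit_interval :
     exists II : A,
       is_cofibrant_obj IA II /\
       (* (vii): a natural isomorphism  II ⊙ (-) ≅ Id_C *)
       (exists (alpha : forall c : C, hom (bo T II c) c)
               (beta : forall c : C, hom c (bo T II c)),
          (forall (c c' : C) (g : hom c c'),
             alpha c' ∘ bm T (idm II) g = g ∘ alpha c) /\
          (forall c : C, alpha c ∘ beta c = idm c /\ beta c ∘ alpha c = idm (bo T II c))) /\
       (* (viii) *)
       (exists (S : A) (i1 i2 : hom II S), is_coproduct i1 i2 /\
        exists (Cc D : A) (i : hom S Cc) (nabla : hom S II) (d : hom II D) (r : hom Cc D),
          nabla ∘ i1 = idm II /\ nabla ∘ i2 = idm II /\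
          d ∘ nabla = r ∘ i /\
          is_cof IA i /\
          (is_cof IA d /\ llp_fib_between_fibrant JA d) /\
          (is_cof IA (i ∘ i1) /\ llp_fib_between_fibrant JA (i ∘ i1)))) :
  exists (zero one : C) (Cof Fib : MapClass C),
    is_weak_model_structure zero one Cof Fib /\
    (forall (x y : C) (f : hom x y),
       (Fib x y f /\ wfibrant one Fib x /\ wfibrant one Fib y) <->
       (is_fib J f /\ is_fibrant_obj J x /\ is_fibrant_obj J y)) /\
    (forall (x y : C) (f : hom x y),
       (Cof x y f /\ wcofibrant zero Cof x /\ wcofibrant zero Cof y) <->
       (is_cof I f /\ is_cofibrant_obj I x /\ is_cofibrant_obj I y)).
Proof.
  destruct unit_interval as [II [_ [[alpha [beta [alpha_nat alpha_beta]]] [S [i1 [i2 [Hcop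
    [Cy [D [incl [codiag [d [r [Hc1 [Hc2 [Hsq [Hincl [[Hd Hd_acyc] [_ He1_acyc]]]]]]]]]]]]]]]]]]].
  destruct (cocomplete_has_initial C_cocomplete) as [zero Hzero].
  destruct (complete_has_terminal C_complete) as [one Hone].
  pose proof (complete_has_pullbacks A_complete) as pbA.
  pose proof (complete_has_pullbacks C_complete) as pbC.
  pose proof (cocomplete_has_pushouts C_cocomplete) as poC.
  exists zero, one, (cof_class I), (fib_class J). split; [|split].
  - apply (weak_model_structure_of_wfs J_sub I_wfs J_wfs poC pbC Hzero Hone).
    + intros a b i Hi Hb.
      exact (relative_cylinder_exists T_div pbA pbC poC Hzero Hone corner_IA_I corner_JA_I
               alpha_nat alpha_beta Hcop Hc1 Hc2 Hsq Hincl Hd Hd_acyc He1_acyc Hi Hb).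
    + intros y x p Hp Hy.
      exact (relative_path_exists T_div pbA pbC poC Hzero Hone corner_IA_J corner_JA_I
               alpha_nat alpha_beta Hcop Hc1 Hc2 Hsq Hincl Hd Hd_acyc He1_acyc Hp Hy).
  - intros x y f. exact (fib_class_between_fibrant J Hone f).
  - intros x y f. exact (cof_class_between_cofibrant I Hzero f).
Qed.
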